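(* Let $(\mathcal L(s),\mathcal P(s))$ be a solution of the $N$-dcmKP hierarchy, with $\mathcal L=k+u_1(s,t)+u_2(s,t)k^{-1}+\cdots$ and $\mathcal P=p_0(s,t)k^N+\cdots$. Then $$\mathcal L^{\mathrm{dmKP}}(k;s,t):=\mathcal L(k-u_1(s,t);s,t),\qquad \mathcal P^{\mathrm{dmKP}}(k;s,t):=p_0(s,t)^{-1}\mathcal P(k-u_1(s,t);s,t)$$ is a solution of the dmKP hierarchy.
   Context: Fix a positive integer $N$. Variables $s$ (continuous), $x$, $t=(t_1,t_2,\dots)$; Poisson bracket $\{f,g\}=\frac{\partial f}{\partial k}\frac{\partial g}{\partial x}-\frac{\partial f}{\partial x}\frac{\partial g}{\partial k}$. For a series, $(\cdot)_{>0}$, $(\cdot)_{\ge0}$ denote projections onto powers $k^n$ with $n>0$, resp. $n\ge0$. For a series $\mathcal P=p_0k^N+\sum_{n\ge1}p_nk^{N-n}$, $\log\mathcal P:=\log p_0+N\log k+\log(1+\sum_{n\ge1}(p_n/p_0)k^{-n})$ expanded in $k^{-1}$. The $N$-dcmKP hierarchy: $\mathcal L=k+\sum_{n\ge1}u_n(s,t)k^{1-n}$, $\mathcal P=\sum_{n=0}^{N-1}p_n(s,t)k^{N-n}$ with $p_0\ne0$, satisfying $\partial_{t_n}\mathcal L=\{\mathcal B_n,\mathcal L\}$ with $\mathcal B_n:=(\mathcal L^n)_{>0}$, $\partial_s\mathcal L=\{\log\mathcal P,\mathcal L\}$, $\partial_{t_n}\log\mathcal P=\partial_s\mathcal B_n-\{\log\mathcal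 P,\mathcal B_n\}$ ($n\ge1$). The dmKP hierarchy: $\mathcal L^{\mathrm{dmKP}}=k+u^{\mathrm{dmKP}}_2k^{-1}+u^{\mathrm{dmKP}}_3k^{-2}+\cdots$ (no $k^0$ term) and $\mathcal P^{\mathrm{dmKP}}=k^N+q_1k^{N-1}+\cdots+q_N$, satisfying the same three equations with $\mathcal B_n$ replaced by $\mathcal B^{\mathrm{dmKP}}_n:=((\mathcal L^{\mathrm{dmKP}})^n)_{\ge0}$. *)

From Stdlib Require Import Reals ZArith List.
From Coquelicot Require Import Coquelicot.
Open Scope R_scope.

(** Coefficient functions of the variables (s, x, t) where
    t : nat -> R encodes the times, with  t m = t_(m+1). *)
Definition Fn := R -> R -> (nat -> R) -> R.

Definition zeroF : Fn := fun _ _ _ => 0.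
Definition constF (c : R) : Fn := fun _ _ _ => c.

Definition upd (t : nat -> R) (m : nat) (y : R) : nat -> R :=
  fun k => if Nat.eqb k m then y else t k.

Definition dS (f : Fn) : Fn := fun s x t => Derive (fun y => f y x t) s.
Definition dX (f : Fn) : Fn := fun s x t => Derive (fun y => f s y t) x.
(** derivative with respect to t_n  (n >= 1), i.e. the coordinate n-1 of t *)
Definition dT (n : nat) (f : Fn) : Fn :=
  fun s x t => Derive (fun y => f s x (upd t (pred n) y)) (t (pred n)).

Definition regular (f : Fn) : Prop :=
  forall s x t,
    ex_derive (fun y => f y x t) s /\ ex_derive (fun y => f s y t) x /\
    forall m, ex_derive (fun y => f s x (upd t m y)) (t m).

(** Formal Laurent series in k, bounded above in degree:
    sum_{i <= sdeg} sco i k^i (coefficients above sdeg are ignored). *)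
Record ser := mkSer { sdeg : Z; sco : Z -> Fn }.

Definition coef (f : ser) (i : Z) : Fn :=
  if (i <=? sdeg f)%Z then sco f i else zeroF.

Definition sumZ (lo : Z) (n : nat) (F : Z -> R) : R :=
  fold_right Rplus 0 (map (fun j => F (lo + Z.of_nat j)%Z) (seq 0 n)).

Definition sadd (f g : ser) : ser :=
  mkSer (Z.max (sdeg f) (sdeg g))
        (fun i s x t => coef f i s x t + coef g i s x t).
Definition sopp (f : ser) : ser :=
  mkSer (sdeg f) (fun i s x t => - coef f i s x t).
Definition ssub (f g : ser) : ser := sadd f (sopp g).
Definition sscale (c : Fn) (f : ser) : ser :=
  mkSer (sdeg f) (fun i s x t => c s x t * coef f i s x t).
Definition smul (f g : ser) : ser :=
  mkSer (sdeg f + sdeg g)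
    (fun m s x t => sumZ (m - sdeg g) (Z.to_nat (sdeg f - (m - sdeg g) + 1))
                         (fun i => coef f i s x t * coef g (m - i) s x t)).
Definition monoS (d : Z) (c : Fn) : ser :=
  mkSer d (fun i => if Z.eqb i d then c else zeroF).
Definition sone : ser := monoS 0 (constF 1).
Definition spow (f : ser) (n : nat) : ser := Nat.iter n (smul f) sone.

Definition spos (f : ser) : ser :=
  mkSer (sdeg f) (fun i => if (0 <? i)%Z then coef f i else zeroF).
Definition snneg (f : ser) : ser :=
  mkSer (sdeg f) (fun i => if (0 <=? i)%Z then coef f i else zeroF).

Definition sdk (f : ser) : ser :=
  mkSer (sdeg f - 1) (fun i s x t => IZR (i + 1) * coef f (i + 1) s x t).
Definition smap (D : Fn -> Fn) (f : ser) : ser :=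
  mkSer (sdeg f) (fun i => D (coef f i)).

Definition pb (f g : ser) : ser :=
  ssub (smul (sdk f) (smap dX g)) (smul (smap dX f) (sdk g)).

Definition ser_eq (f g : ser) : Prop :=
  forall i s x t, coef f i s x t = coef g i s x t.

(** Logarithm of P = p_0 k^N + sum_{n>=1} p_n k^{N-n} (N = its degree):
    log P = log p_0 + N log k + log(1 + q),  q = sum_{n>=1} (p_n/p_0) k^{-n},
    log(1+q) = sum_{m>=1} (-1)^(m+1) q^m / m  expanded in k^{-1}. *)
Definition lead (P : ser) (N : Z) : Fn := coef P N.
Definition lq (P : ser) (N : Z) : ser :=
  mkSer (-1) (fun i s x t => coef P (N + i) s x t / lead P N s x t).
Definition logtail (P : ser) (N : Z) : ser :=
  mkSer (-1) (fun i s x t =>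
    fold_right Rplus 0
      (map (fun m => (-1) ^ (m + 1) / INR m * coef (spow (lq P N) m) i s x t)
           (seq 1 (Z.to_nat (- i))))).
(** the function log p_0 (real logarithm of |p_0|; only its derivatives enter) *)
Definition logc (P : ser) (N : Z) : Fn := fun s x t => ln (Rabs (lead P N s x t)).

Definition log_dk (P : ser) (N : Z) : ser :=
  sadd (monoS (-1) (constF (IZR N))) (sdk (logtail P N)).
(** D log P for D a derivation in s, x or t_n (log k is independent of them) *)
Definition log_dD (D : Fn -> Fn) (P : ser) (N : Z) : ser :=
  sadd (monoS 0 (D (logc P N))) (smap D (logtail P N)).
Definition pbLog (P : ser) (N : Z) (g : ser) : ser :=
  ssub (smul (log_dk P N) (smap dX g)) (smul (log_dD dX P N) (sdk g)).

Definition hier_eqs (N : Z) (B : nat -> ser) (L P : ser) : Prop :=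
  (forall n, (1 <= n)%nat -> ser_eq (smap (dT n) L) (pb (B n) L)) /\
  ser_eq (smap dS L) (pbLog P N L) /\
  (forall n, (1 <= n)%nat ->
     ser_eq (log_dD (dT n) P N) (ssub (smap dS (B n)) (pbLog P N (B n)))).

Definition regular_ser (f : ser) : Prop := forall i, regular (coef f i).

Definition is_dcmKP (N : nat) (L P : ser) : Prop :=
  (forall s x t, coef L 1 s x t = 1) /\
  (forall i, (1 < i)%Z -> forall s x t, coef L i s x t = 0) /\
  (forall i, (Z.of_nat N < i)%Z -> forall s x t, coef P i s x t = 0) /\
  (forall i, (i <= 0)%Z -> forall s x t, coef P i s x t = 0) /\
  (forall s x t, coef P (Z.of_nat N) s x t <> 0) /\
  regular_ser L /\ regular_ser P /\
  hier_eqs (Z.of_nat N) (fun n => spos (spow L n)) L P.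

Definition is_dmKP (N : nat) (L P : ser) : Prop :=
  (forall s x t, coef L 1 s x t = 1) /\
  (forall i, (1 < i)%Z -> forall s x t, coef L i s x t = 0) /\
  (forall s x t, coef L 0 s x t = 0) /\
  (forall s x t, coef P (Z.of_nat N) s x t = 1) /\
  (forall i, (Z.of_nat N < i)%Z -> forall s x t, coef P i s x t = 0) /\
  (forall i, (i < 0)%Z -> forall s x t, coef P i s x t = 0) /\
  regular_ser L /\ regular_ser P /\
  hier_eqs (Z.of_nat N) (fun n => snneg (spow L n)) L P.

Definition gbinom (z : Z) (j : nat) : R :=
  fold_right Rmult 1 (map (fun l => IZR z - INR l) (seq 0 j)) / INR (fact j).

(** f(k - a) expanded in powers of k^{-1}:
    coefficient of k^m is  sum_{j>=0} f_{m+j} binom(m+j, j) (-a)^j *)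
Definition sshift (f : ser) (a : Fn) : ser :=
  mkSer (sdeg f) (fun m s x t =>
    sumZ 0 (Z.to_nat (sdeg f - m + 1))
      (fun j => coef f (m + j) s x t * gbinom (m + j) (Z.to_nat j) * (- a s x t) ^ (Z.to_nat j))).

From Pilot Require Import Defs.
From Stdlib Require Import Reals ZArith List Lia Lra Setoid Morphisms FunctionalExtensionality.
From Coquelicot Require Import Coquelicot.
Open Scope R_scope.

(* With a = u_1, the substitution k -> k - a is a ring homomorphism of Laurent series in
   k^{-1} which commutes with d/dk and obeys the chain rule
   D(f(k - a)) = (D f)(k - a) - (D a) (f_k)(k - a) for D = d/ds, d/dx, d/dt_n.
   Logarithmic derivatives are characterised by P d(log P) = dP (for log(1 + q) by telescoping
   its truncations) and P may be cancelled, its leading coefficient being invertible; so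
   d/dk log P' = (d/dk log P)(k - a) and D log P' = (D log P)(k - a) - (D a)(d/dk log P)(k - a)
   - D p_0/p_0 for P' = P(k - a)/p_0.  Moreover (L'^n)_{>=0} = ((L^n)_{>0})(k - a) + (L^n)_0,
   as a series with only positive powers of k has none of degree <= 0 after the shift.
   Substituting all this into the dcmKP equations, the extra terms are constants in k, and they
   cancel by the constant terms of the dcmKP equations themselves:
   d_{t_n} u_1 = d_x (L^n)_0, d_s u_1 = -d_x p_0/p_0 and d_s (L^n)_0 = -d_{t_n} p_0/p_0. *)

(** * Finite sums over integer ranges *)

Lemma sumZ_0 lo F : sumZ lo 0 F = 0.
Proof. reflexivity. Qed.

Lemma sumZ_S lo n F : sumZ lo (S n) F = F lo + sumZ (lo+1) n F.
Proof.
  unfold sumZ. simpl. rewrite Z.add_0_r. f_equal.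
  rewrite <- seq_shift, map_map. f_equal. apply map_ext. intros j. f_equal. lia.
Qed.

Lemma sumZ_Sr lo n F : sumZ lo (S n) F = sumZ lo n F + F (lo + Z.of_nat n)%Z.
Proof.
  revert lo; induction n; intros lo.
  - rewrite sumZ_S, !sumZ_0. simpl. rewrite Z.add_0_r. ring.
  - rewrite sumZ_S, IHn, (sumZ_S lo n). replace (lo + 1 + Z.of_nat n)%Z with (lo + Z.of_nat (S n))%Z by lia. ring.
Qed.

Lemma sumZ_add lo n m F : sumZ lo (n+m) F = sumZ lo n F + sumZ (lo + Z.of_nat n) m F.
Proof.
  revert lo; induction n; intros lo.
  - simpl. rewrite sumZ_0, Z.add_0_r. ring.
  - rewrite Nat.add_succ_l, !sumZ_S, IHn. replace (lo + 1 + Z.of_nat n)%Z with (lo + Z.of_nat (S n))%Z by lia. ring.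
Qed.

Lemma sumZ_ext lo n F G : (forall j, (lo <= j < lo + Z.of_nat n)%Z -> F j = G j) ->
  sumZ lo n F = sumZ lo n G.
Proof.
  revert lo; induction n; intros lo H; [reflexivity|].
  rewrite !sumZ_S. f_equal; [apply H; lia|]. apply IHn. intros; apply H; lia.
Qed.

Lemma sumZ_zero lo n F : (forall j, (lo <= j < lo + Z.of_nat n)%Z -> F j = 0) -> sumZ lo n F = 0.
Proof.
  intros H. transitivity (sumZ lo n (fun _ => 0)).
  - apply sumZ_ext; auto.
  - clear H. revert lo; induction n; intros lo; [reflexivity|]. rewrite sumZ_S, IHn; ring.
Qed.

Lemma sumZ_plus lo n F G : sumZ lo n (fun j => F j + G j) = sumZ lo n F + sumZ lo n G.
Proof. revert lo; induction n; intros lo; [simpl; unfold sumZ; simpl; ring|]. rewrite !sumZ_S, IHn; ring. Qed.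

Lemma sumZ_scal lo n c F : sumZ lo n (fun j => c * F j) = c * sumZ lo n F.
Proof. revert lo; induction n; intros lo; [unfold sumZ; simpl; ring|]. rewrite !sumZ_S, IHn; ring. Qed.

Lemma sumZ_scalr lo n c F : sumZ lo n (fun j => F j * c) = sumZ lo n F * c.
Proof. revert lo; induction n; intros lo; [unfold sumZ; simpl; ring|]. rewrite !sumZ_S, IHn; ring. Qed.

Lemma sumZ_opp lo n F : sumZ lo n (fun j => - F j) = - sumZ lo n F.
Proof. revert lo; induction n; intros lo; [unfold sumZ; simpl; ring|]. rewrite !sumZ_S, IHn; ring. Qed.

Lemma sumZ_exchange a n b m (F : Z -> Z -> R) :
  sumZ a n (fun i => sumZ b m (fun j => F i j)) = sumZ b m (fun j => sumZ a n (fun i => F i j)).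
Proof.
  revert a; induction n; intros a.
  - rewrite sumZ_0. symmetry. apply sumZ_zero. intros; reflexivity.
  - rewrite sumZ_S, IHn. rewrite <- sumZ_plus. apply sumZ_ext. intros. rewrite sumZ_S. reflexivity.
Qed.

Lemma sumZ_shift lo n c F : sumZ lo n (fun i => F (i + c)%Z) = sumZ (lo + c) n F.
Proof.
  revert lo; induction n; intros lo; [reflexivity|]. rewrite !sumZ_S, IHn.
  f_equal. f_equal. lia.
Qed.

Lemma sumZ_reflect lo n m F : sumZ lo n (fun i => F (m - i)%Z) = sumZ (m - (lo + Z.of_nat n - 1)) n F.
Proof.
  revert lo; induction n; intros lo; [reflexivity|]. rewrite sumZ_S, sumZ_Sr, IHn.
  replace (m - (lo + 1 + Z.of_nat n - 1))%Z with (m - (lo + Z.of_nat (S n) - 1))%Z by lia.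
  replace (m - (lo + Z.of_nat (S n) - 1) + Z.of_nat n)%Z with (m - lo)%Z by lia. ring.
Qed.

Definition supported_in (F : Z -> R) (a b : Z) : Prop := forall i, (i < a \/ b < i)%Z -> F i = 0.

Lemma sumZ_supported F a b lo n : supported_in F a b -> (lo <= a)%Z -> (b < lo + Z.of_nat n)%Z ->
  sumZ lo n F = sumZ a (Z.to_nat (b - a + 1)) F.
Proof.
  intros H H1 H2. destruct (Z_lt_le_dec b a) as [Hba|Hba].
  - rewrite sumZ_zero by (intros; apply H; lia). symmetry; apply sumZ_zero. intros; apply H; lia.
  - replace n with (Z.to_nat (a - lo) + (Z.to_nat (b - a + 1) + (n - Z.to_nat (b - lo + 1))))%nat by lia.
    rewrite !sumZ_add. rewrite (sumZ_zero lo) by (intros; apply H; lia).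
    rewrite (sumZ_zero (lo + Z.of_nat (Z.to_nat (a - lo)) + _)) by (intros; apply H; lia).
    replace (lo + Z.of_nat (Z.to_nat (a - lo)))%Z with a by lia. ring.
Qed.

Lemma sumZ_supported_indep F a b lo n lo' n' : supported_in F a b ->
  (lo <= a)%Z -> (b < lo + Z.of_nat n)%Z -> (lo' <= a)%Z -> (b < lo' + Z.of_nat n')%Z ->
  sumZ lo n F = sumZ lo' n' F.
Proof. intros. rewrite (sumZ_supported F a b lo n), (sumZ_supported F a b lo' n'); auto. Qed.

Lemma sumZ_supported1 F b lo n : supported_in F b b -> (lo <= b)%Z -> (b < lo + Z.of_nat n)%Z -> sumZ lo n F = F b.
Proof.
  intros H H1 H2. rewrite (sumZ_supported F b b lo n) by auto. replace (Z.to_nat (b - b + 1)) with 1%nat by lia.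
  rewrite sumZ_S, sumZ_0. ring.
Qed.

Lemma sumZ_mul_sumZ lo n F lo' n' G :
  sumZ lo n F * sumZ lo' n' G = sumZ lo n (fun i => sumZ lo' n' (fun j => F i * G j)).
Proof.
  rewrite <- sumZ_scalr. apply sumZ_ext. intros. rewrite sumZ_scal. reflexivity.
Qed.

Lemma sumZ_shift_eq lo n c G F : (forall j, (lo <= j < lo + Z.of_nat n)%Z -> G j = F (j + c)%Z) ->
  sumZ lo n G = sumZ (lo + c) n F.
Proof. intros H. rewrite <- sumZ_shift. apply sumZ_ext; auto. Qed.

Lemma sumZ_reflect_eq lo n m G F : (forall j, (lo <= j < lo + Z.of_nat n)%Z -> G j = F (m - j)%Z) ->
  sumZ lo n G = sumZ (m - (lo + Z.of_nat n - 1)) n F.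
Proof. intros H. rewrite <- sumZ_reflect. apply sumZ_ext; auto. Qed.

(** * Series arithmetic *)

Lemma coef_hi f i s x t : (sdeg f < i)%Z -> coef f i s x t = 0.
Proof. intros H. unfold coef. destruct (Z.leb_spec i (sdeg f)); [lia|reflexivity]. Qed.

Definition deg_le (f : ser) (d : Z) : Prop := forall i, (d < i)%Z -> forall s x t, coef f i s x t = 0.

Lemma deg_le_sdeg f : deg_le f (sdeg f).
Proof. intros i Hi s x t; apply coef_hi; auto. Qed.

Lemma deg_le_mono f d d' : deg_le f d -> (d <= d')%Z -> deg_le f d'.
Proof. intros H Hd i Hi; apply H; lia. Qed.

Lemma deg_le_eq f g d : ser_eq f g -> deg_le f d -> deg_le g d.
Proof. intros E H i Hi s x t. rewrite <- E. apply H; auto. Qed.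

Definition szero : ser := mkSer 0 (fun _ => zeroF).

Lemma coef_szero i s x t : coef szero i s x t = 0.
Proof. unfold coef; destruct (_ <=? _)%Z; reflexivity. Qed.

Lemma coef_sadd f g i s x t : coef (sadd f g) i s x t = coef f i s x t + coef g i s x t.
Proof.
  unfold coef at 1; simpl. destruct (Z.leb_spec i (Z.max (sdeg f) (sdeg g))); [reflexivity|].
  rewrite !coef_hi by lia. unfold zeroF; ring.
Qed.

Lemma coef_sopp f i s x t : coef (sopp f) i s x t = - coef f i s x t.
Proof.
  unfold coef at 1; simpl. destruct (Z.leb_spec i (sdeg f)); [reflexivity|].
  rewrite !coef_hi by lia. unfold zeroF; ring.
Qed.

Lemma coef_ssub f g i s x t : coef (ssub f g) i s x t = coef f i s x t - coef g i s x t.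
Proof. unfold ssub. rewrite coef_sadd, coef_sopp. ring. Qed.

Lemma coef_sscale c f i s x t : coef (sscale c f) i s x t = c s x t * coef f i s x t.
Proof.
  unfold coef at 1; simpl. destruct (Z.leb_spec i (sdeg f)); [reflexivity|].
  rewrite !coef_hi by lia. unfold zeroF; ring.
Qed.

Lemma coef_monoS d c i s x t : coef (monoS d c) i s x t = if Z.eqb i d then c s x t else 0.
Proof.
  unfold coef; simpl. destruct (Z.leb_spec i d); destruct (Z.eqb_spec i d); try reflexivity; lia.
Qed.

Lemma coef_sone i s x t : coef sone i s x t = if Z.eqb i 0 then 1 else 0.
Proof. unfold sone. rewrite coef_monoS. reflexivity. Qed.

Lemma coef_sdk f i s x t : coef (sdk f) i s x t = IZR (i + 1) * coef f (i + 1) s x t.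
Proof.
  unfold coef at 1; simpl. destruct (Z.leb_spec i (sdeg f - 1)); [reflexivity|].
  rewrite !coef_hi by lia. unfold zeroF; ring.
Qed.

Lemma coef_spos f i s x t : coef (spos f) i s x t = if (0 <? i)%Z then coef f i s x t else 0.
Proof.
  unfold coef at 1; simpl. destruct (Z.leb_spec i (sdeg f)); [destruct (0 <? i)%Z; reflexivity|].
  rewrite !coef_hi by lia. destruct (0 <? i)%Z; reflexivity.
Qed.

Lemma coef_snneg f i s x t : coef (snneg f) i s x t = if (0 <=? i)%Z then coef f i s x t else 0.
Proof.
  unfold coef at 1; simpl. destruct (Z.leb_spec i (sdeg f)); [destruct (0 <=? i)%Z; reflexivity|].
  rewrite !coef_hi by lia. destruct (0 <=? i)%Z; reflexivity.
Qed.

Lemma coef_smap D f i s x t : D zeroF = zeroF -> coef (smap D f) i s x t = D (coef f i) s x t.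
Proof.
  intros HD. unfold coef at 1; simpl. destruct (Z.leb_spec i (sdeg f)).
  - reflexivity.
  - unfold coef. destruct (Z.leb_spec i (sdeg f)); [lia|]. rewrite HD. reflexivity.
Qed.

Lemma coef_smul_window f g df dg m lo n s x t :
  deg_le f df -> deg_le g dg -> (lo <= m - dg)%Z -> (df < lo + Z.of_nat n)%Z ->
  coef (smul f g) m s x t = sumZ lo n (fun i => coef f i s x t * coef g (m - i) s x t).
Proof.
  intros Hf Hg H1 H2.
  assert (Hs : supported_in (fun i => coef f i s x t * coef g (m - i) s x t) (Z.max (m - dg) (m - sdeg g)) (Z.min df (sdeg f))).
  { intros i Hi. destruct (Z_lt_le_dec i (Z.max (m - dg) (m - sdeg g))).
    - destruct (Z_lt_le_dec i (m - dg)).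
      + rewrite (Hg (m - i)%Z) by lia; ring.
      + rewrite (coef_hi g (m-i)) by lia; ring.
    - destruct (Z_lt_le_dec df i).
      + rewrite (Hf i) by lia; ring.
      + rewrite (coef_hi f i) by lia; ring. }
  unfold coef at 1; simpl. destruct (Z.leb_spec m (sdeg f + sdeg g)).
  - apply (sumZ_supported_indep _ _ _ _ _ _ _ Hs); lia.
  - unfold zeroF. symmetry. apply sumZ_zero. intros j Hj. apply Hs. lia.
Qed.

Lemma coef_smul_deg f g df dg m s x t :
  deg_le f df -> deg_le g dg ->
  coef (smul f g) m s x t = sumZ (m - dg) (Z.to_nat (df - (m - dg) + 1)) (fun i => coef f i s x t * coef g (m - i) s x t).
Proof. intros; apply coef_smul_window with df dg; auto; lia. Qed.

Lemma deg_le_smul f g df dg : deg_le f df -> deg_le g dg -> deg_le (smul f g) (df + dg).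
Proof.
  intros Hf Hg m Hm s x t. rewrite (coef_smul_deg f g df dg) by auto.
  apply sumZ_zero. intros j Hj. rewrite (Hf j) by lia. ring.
Qed.

Lemma coef_smul_top f g df dg s x t : deg_le f df -> deg_le g dg ->
  coef (smul f g) (df + dg) s x t = coef f df s x t * coef g dg s x t.
Proof.
  intros Hf Hg. rewrite (coef_smul_window f g df dg _ df 1) by (auto; lia).
  rewrite sumZ_S, sumZ_0. replace (df + dg - df)%Z with dg by lia. ring.
Qed.

Lemma deg_le_sadd f g d : deg_le f d -> deg_le g d -> deg_le (sadd f g) d.
Proof. intros Hf Hg i Hi s x t. rewrite coef_sadd, Hf, Hg by auto. ring. Qed.
Lemma deg_le_sopp f d : deg_le f d -> deg_le (sopp f) d.
Proof. intros Hf i Hi s x t. rewrite coef_sopp, Hf by auto. ring. Qed.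
Lemma deg_le_sscale c f d : deg_le f d -> deg_le (sscale c f) d.
Proof. intros Hf i Hi s x t. rewrite coef_sscale, Hf by auto. ring. Qed.
Lemma deg_le_monoS d c : deg_le (monoS d c) d.
Proof. intros i Hi s x t. rewrite coef_monoS. destruct (Z.eqb_spec i d); [lia|auto]. Qed.
Lemma deg_le_sdk f d : deg_le f d -> deg_le (sdk f) (d - 1).
Proof. intros Hf i Hi s x t. rewrite coef_sdk, Hf by lia. ring. Qed.

Lemma ser_eq_refl f : ser_eq f f. Proof. intros ????; reflexivity. Qed.
Lemma ser_eq_sym f g : ser_eq f g -> ser_eq g f. Proof. intros H ????; symmetry; apply H. Qed.
Lemma ser_eq_trans f g h : ser_eq f g -> ser_eq g h -> ser_eq f h.
Proof. intros H1 H2 ????; rewrite H1; apply H2. Qed.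

Definition ser_setoid : Setoid_Theory ser ser_eq :=
  Build_Setoid_Theory _ ser_eq ser_eq_refl ser_eq_sym ser_eq_trans.
#[global] Instance ser_eq_Equiv : Equivalence ser_eq := ser_setoid.

#[global] Instance sadd_Proper : Proper (ser_eq ==> ser_eq ==> ser_eq) sadd.
Proof. intros f f' Hf g g' Hg i s x t. rewrite !coef_sadd, Hf, Hg; reflexivity. Qed.
#[global] Instance sopp_Proper : Proper (ser_eq ==> ser_eq) sopp.
Proof. intros f f' Hf i s x t. rewrite !coef_sopp, Hf; reflexivity. Qed.
#[global] Instance ssub_Proper : Proper (ser_eq ==> ser_eq ==> ser_eq) ssub.
Proof. intros f f' Hf g g' Hg i s x t. rewrite !coef_ssub, Hf, Hg; reflexivity. Qed.
#[global] Instance smul_Proper : Proper (ser_eq ==> ser_eq ==> ser_eq) smul.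
Proof.
  intros f f' Hf g g' Hg m s x t.
  rewrite (coef_smul_deg f g (sdeg f) (sdeg g)) by apply deg_le_sdeg.
  rewrite (coef_smul_deg f' g' (sdeg f) (sdeg g)).
  - apply sumZ_ext. intros. rewrite Hf, Hg. reflexivity.
  - apply (deg_le_eq f); auto; apply deg_le_sdeg.
  - apply (deg_le_eq g); auto; apply deg_le_sdeg.
Qed.
#[global] Instance sdk_Proper : Proper (ser_eq ==> ser_eq) sdk.
Proof. intros f f' Hf i s x t. rewrite !coef_sdk, Hf; reflexivity. Qed.
#[global] Instance snneg_Proper : Proper (ser_eq ==> ser_eq) snneg.
Proof. intros f f' Hf i s x t. rewrite !coef_snneg, Hf; reflexivity. Qed.
#[global] Instance sscale_Proper c : Proper (ser_eq ==> ser_eq) (sscale c).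
Proof. intros f f' Hf i s x t. rewrite !coef_sscale, Hf; reflexivity. Qed.

Lemma fn_ext (f g : Defs.Fn) : (forall s x t, f s x t = g s x t) -> f = g.
Proof.
  intros H. apply functional_extensionality; intros s; apply functional_extensionality; intros x;
  apply functional_extensionality; intros t; auto.
Qed.

Lemma coef_fun_eq f g : ser_eq f g -> forall i, coef f i = coef g i.
Proof. intros H i. apply fn_ext, H. Qed.

Lemma smap_eq D f f' : D zeroF = zeroF -> ser_eq f f' -> ser_eq (smap D f) (smap D f').
Proof.
  intros HD Hf i s x t. rewrite !coef_smap by auto. rewrite (coef_fun_eq f f' Hf). reflexivity.
Qed.

Lemma sadd_0_l f : ser_eq (sadd szero f) f.
Proof. intros i s x t. rewrite coef_sadd, coef_szero. ring. Qed.
Lemma sadd_comm f g : ser_eq (sadd f g) (sadd g f).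
Proof. intros i s x t. rewrite !coef_sadd. ring. Qed.
Lemma sadd_assoc f g h : ser_eq (sadd f (sadd g h)) (sadd (sadd f g) h).
Proof. intros i s x t. rewrite !coef_sadd. ring. Qed.
Lemma sopp_def f : ser_eq (sadd f (sopp f)) szero.
Proof. intros i s x t. rewrite coef_sadd, coef_sopp, coef_szero. ring. Qed.

Lemma smul_1_l f : ser_eq (smul sone f) f.
Proof.
  intros m s x t.
  rewrite (coef_smul_window sone f 0 (sdeg f) m (Z.min 0 (m - sdeg f)) (Z.to_nat (1 - Z.min 0 (m - sdeg f))))
    by (try apply deg_le_monoS; try apply deg_le_sdeg; lia).
  assert (Hs : supported_in (fun i => coef sone i s x t * coef f (m - i) s x t) 0 0).
  { intros i Hi. rewrite coef_sone. destruct (Z.eqb_spec i 0); [lia|ring]. }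
  rewrite (sumZ_supported _ 0 0 _ _ Hs) by lia. change (Z.to_nat (0 - 0 + 1)) with 1%nat. rewrite sumZ_S, sumZ_0, coef_sone. simpl.
  replace (m - 0)%Z with m by lia. ring.
Qed.

Lemma smul_comm f g : ser_eq (smul f g) (smul g f).
Proof.
  intros m s x t.
  rewrite (coef_smul_deg f g (sdeg f) (sdeg g)) by apply deg_le_sdeg.
  rewrite (coef_smul_deg g f (sdeg g) (sdeg f)) by apply deg_le_sdeg.
  assert (R := sumZ_reflect (m - sdeg f) (Z.to_nat (sdeg g - (m - sdeg f) + 1)) m (fun i => coef f i s x t * coef g (m - i) s x t)). cbv beta in R.
  rewrite (sumZ_ext (m - sdeg f) _ _ (fun j => coef f (m - j) s x t * coef g (m - (m - j)) s x t)).
  2:{ intros j _. replace (m - (m - j))%Z with j by lia. ring. }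
  rewrite R.
  replace (Z.to_nat (sdeg g - (m - sdeg f) + 1)) with (Z.to_nat (sdeg f - (m - sdeg g) + 1)) by lia.
  destruct (Z.to_nat (sdeg f - (m - sdeg g) + 1)) eqn:E; [reflexivity|].
  f_equal. lia.
Qed.

Lemma smul_assoc f g h : ser_eq (smul f (smul g h)) (smul (smul f g) h).
Proof.
  intros m s x t.
  set (df := sdeg f). set (dg := sdeg g). set (dh := sdeg h).
  assert (Hf : deg_le f df) by apply deg_le_sdeg.
  assert (Hg : deg_le g dg) by apply deg_le_sdeg.
  assert (Hh : deg_le h dh) by apply deg_le_sdeg.
  set (N1 := Z.to_nat (df + dg - (m - dh) + 1)).
  set (N2 := Z.to_nat (df - (m - dh - dg) + 1)).
  rewrite (coef_smul_window (smul f g) h (df + dg) dh m (m - dh) N1) by (try apply deg_le_smul; auto; lia).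
  rewrite (sumZ_ext _ _ _ (fun i => sumZ (m - dh - dg) N2 (fun j => coef f j s x t * coef g (i - j) s x t * coef h (m - i) s x t))).
  2:{ intros i Hi. rewrite (coef_smul_window f g df dg i (m - dh - dg) N2) by (auto; lia).
      rewrite sumZ_scalr. reflexivity. }
  rewrite sumZ_exchange.
  rewrite (coef_smul_window f (smul g h) df (dg + dh) m (m - dh - dg) N2) by (try apply deg_le_smul; auto; lia).
  apply sumZ_ext. intros j Hj.
  rewrite (coef_smul_window g h dg dh (m - j) (m - dh - j) N1) by (auto; lia).
  rewrite <- sumZ_scal.
  assert (E : forall F, sumZ (m - dh) N1 F = sumZ (m - dh - j) N1 (fun l => F (l + j)%Z)).
  { intros F. rewrite sumZ_shift. f_equal. lia. }
  rewrite E.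
  apply sumZ_ext. intros l _. replace (l + j - j)%Z with l by lia. replace (m - (l + j))%Z with (m - j - l)%Z by lia. ring.
Qed.

Lemma smul_distr_l f g h : ser_eq (smul (sadd f g) h) (sadd (smul f h) (smul g h)).
Proof.
  intros m s x t. rewrite coef_sadd.
  set (d := Z.max (sdeg f) (sdeg g)).
  assert (Hf : deg_le f d) by (apply (deg_le_mono _ (sdeg f)); [apply deg_le_sdeg|lia]).
  assert (Hg : deg_le g d) by (apply (deg_le_mono _ (sdeg g)); [apply deg_le_sdeg|lia]).
  assert (Hh : deg_le h (sdeg h)) by apply deg_le_sdeg.
  rewrite (coef_smul_deg (sadd f g) h d (sdeg h)) by (try apply deg_le_sadd; auto).
  rewrite (coef_smul_deg f h d (sdeg h)) by auto.
  rewrite (coef_smul_deg g h d (sdeg h)) by auto.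
  rewrite <- sumZ_plus. apply sumZ_ext. intros. rewrite coef_sadd. ring.
Qed.

Lemma ser_ring_theory : ring_theory szero sone sadd smul ssub sopp ser_eq.
Proof.
  constructor.
  - apply sadd_0_l.
  - apply sadd_comm.
  - apply sadd_assoc.
  - apply smul_1_l.
  - apply smul_comm.
  - apply smul_assoc.
  - apply smul_distr_l.
  - intros; reflexivity.
  - apply sopp_def.
Qed.

Lemma ser_ring_ext : ring_eq_ext sadd smul sopp ser_eq.
Proof. constructor; try apply sadd_Proper; try apply smul_Proper; apply sopp_Proper. Qed.

Add Ring serRing : ser_ring_theory (setoid ser_setoid ser_ring_ext).

Lemma coef_smul_monoS_l d c f i s x t :
  coef (smul (monoS d c) f) i s x t = c s x t * coef f (i - d) s x t.
Proof.
  rewrite (coef_smul_window (monoS d c) f d (sdeg f) i (Z.min d (i - sdeg f)) (Z.to_nat (d + 1 - Z.min d (i - sdeg f))))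
    by (try apply deg_le_monoS; try apply deg_le_sdeg; lia).
  assert (Hs : supported_in (fun j => coef (monoS d c) j s x t * coef f (i - j) s x t) d d).
  { intros j Hj. rewrite coef_monoS. destruct (Z.eqb_spec j d); [lia|ring]. }
  rewrite (sumZ_supported _ d d _ _ Hs) by lia. replace (Z.to_nat (d - d + 1)) with 1%nat by lia.
  rewrite sumZ_S, sumZ_0, coef_monoS, Z.eqb_refl. ring.
Qed.

Lemma sscale_monoS c f : ser_eq (sscale c f) (smul (monoS 0 c) f).
Proof. intros i s x t. rewrite coef_sscale, coef_smul_monoS_l. f_equal. f_equal. lia. Qed.

Lemma monoS_ext d c c' : (forall s x t, c s x t = c' s x t) -> ser_eq (monoS d c) (monoS d c').
Proof. intros H i s x t. rewrite !coef_monoS. destruct (i =? d)%Z; auto. Qed.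

Lemma monoS_mul d e c c' : ser_eq (smul (monoS d c) (monoS e c')) (monoS (d + e) (fun s x t => c s x t * c' s x t)).
Proof.
  intros i s x t. rewrite coef_smul_monoS_l, !coef_monoS.
  destruct (Z.eqb_spec (i - d) e), (Z.eqb_spec i (d + e)); try lia; ring.
Qed.

Lemma monoS_add d c c' : ser_eq (sadd (monoS d c) (monoS d c')) (monoS d (fun s x t => c s x t + c' s x t)).
Proof. intros i s x t. rewrite coef_sadd, !coef_monoS. destruct (i =? d)%Z; ring. Qed.

Lemma monoS_opp d c : ser_eq (sopp (monoS d c)) (monoS d (fun s x t => - c s x t)).
Proof. intros i s x t. rewrite coef_sopp, !coef_monoS. destruct (i =? d)%Z; ring. Qed.

Lemma monoS_zero d : ser_eq (monoS d zeroF) szero.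
Proof. intros i s x t. rewrite coef_szero, !coef_monoS. destruct (i =? d)%Z; reflexivity. Qed.

Lemma sdk_add f g : ser_eq (sdk (sadd f g)) (sadd (sdk f) (sdk g)).
Proof. intros i s x t. rewrite !coef_sdk, !coef_sadd, !coef_sdk. ring. Qed.
Lemma sdk_opp f : ser_eq (sdk (sopp f)) (sopp (sdk f)).
Proof. intros i s x t. rewrite !coef_sdk, !coef_sopp, !coef_sdk. ring. Qed.
Lemma sdk_sscale c f : ser_eq (sdk (sscale c f)) (sscale c (sdk f)).
Proof. intros i s x t. rewrite !coef_sdk, !coef_sscale, !coef_sdk. ring. Qed.
Lemma sdk_monoS d c : ser_eq (sdk (monoS d c)) (monoS (d - 1) (fun s x t => IZR d * c s x t)).
Proof.
  intros i s x t. rewrite coef_sdk, !coef_monoS.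
  destruct (Z.eqb_spec (i+1) d), (Z.eqb_spec i (d - 1)); try lia; try ring. subst. ring.
Qed.
Lemma sdk_sone : ser_eq (sdk sone) szero.
Proof. unfold sone. rewrite sdk_monoS. intros i s x t. rewrite coef_monoS, coef_szero. destruct (_ =? _)%Z; simpl; ring. Qed.

Lemma sdk_mul f g : ser_eq (sdk (smul f g)) (sadd (smul (sdk f) g) (smul f (sdk g))).
Proof.
  intros m s x t. rewrite coef_sdk, coef_sadd.
  set (df := sdeg f). set (dg := sdeg g).
  assert (Hf : deg_le f df) by apply deg_le_sdeg.
  assert (Hg : deg_le g dg) by apply deg_le_sdeg.
  set (lo := (m - dg)%Z). set (n := Z.to_nat (df - lo + 2)).
  rewrite (coef_smul_window f g df dg (m+1) lo n) by (auto; unfold lo, n; lia).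
  rewrite (coef_smul_window (sdk f) g (df - 1) dg m (lo - 1) n) by (try apply deg_le_sdk; auto; unfold lo, n; lia).
  rewrite (coef_smul_window f (sdk g) df (dg - 1) m lo n) by (try apply deg_le_sdk; auto; unfold lo, n; lia).
  replace (lo - 1)%Z with (lo + -1)%Z by lia. rewrite <- sumZ_shift.
  rewrite <- sumZ_plus, <- sumZ_scal. apply sumZ_ext. intros i _.
  rewrite !coef_sdk. replace (i + -1 + 1)%Z with i by lia. replace (m - (i + -1))%Z with (m + 1 - i)%Z by lia.
  replace (m - i + 1)%Z with (m + 1 - i)%Z by lia.
  replace (IZR (m + 1 - i)) with (IZR (m+1) - IZR i) by (rewrite minus_IZR; reflexivity). ring.
Qed.

Lemma spow_S f n : spow f (S n) = smul f (spow f n).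
Proof. reflexivity. Qed.

Lemma deg_le_spow f d n : deg_le f d -> deg_le (spow f n) (Z.of_nat n * d).
Proof.
  intros Hf. induction n.
  - simpl. apply deg_le_monoS.
  - rewrite spow_S. apply (deg_le_mono _ (d + Z.of_nat n * d)). apply deg_le_smul; auto. lia.
Qed.

Lemma deg_le_sone : deg_le sone 0.
Proof. apply deg_le_monoS. Qed.

(** * Generalized binomial coefficients *)

Definition falling (z : Z) (j : nat) : R := fold_right Rmult 1 (map (fun l => IZR z - INR l) (seq 0 j)).

Lemma falling_Sr z j : falling z (S j) = falling z j * (IZR z - INR j).
Proof.
  unfold falling. rewrite seq_S, map_app, fold_right_app. simpl.
  generalize (map (fun l => IZR z - INR l) (seq 0 j)). intros l.
  rewrite Rmult_1_r. induction l; simpl; [ring|]. rewrite IHl. ring.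
Qed.

Lemma falling_Sl z j : falling z (S j) = IZR z * falling (z - 1) j.
Proof.
  induction j.
  - unfold falling; simpl. ring.
  - rewrite falling_Sr, IHj, falling_Sr, minus_IZR, S_INR. simpl. ring.
Qed.

Lemma gbinom_0 z : gbinom z 0 = 1.
Proof. unfold gbinom; simpl. field. Qed.

Lemma gbinom_eq z j : gbinom z j = falling z j / INR (fact j).
Proof. reflexivity. Qed.

Lemma INR_fact_nz j : INR (fact j) <> 0.
Proof. apply not_0_INR. apply fact_neq_0. Qed.

Lemma gbinom_Sr z j : gbinom z (S j) = gbinom z j * (IZR z - INR j) / INR (S j).
Proof.
  rewrite !gbinom_eq, falling_Sr. rewrite fact_simpl, mult_INR.
  field. split; [apply INR_fact_nz|]. apply not_0_INR. lia.
Qed.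

Lemma gbinom_pascal z j : gbinom (z + 1) (S j) = gbinom z (S j) + gbinom z j.
Proof.
  rewrite !gbinom_eq, falling_Sl, falling_Sr. replace (z + 1 - 1)%Z with z by lia.
  rewrite fact_simpl, mult_INR, plus_IZR, S_INR.
  field. split; [apply INR_fact_nz|]. pose proof (pos_INR j). lra.
Qed.

Lemma gbinom_absorb z j : (IZR z + 1 - INR j) * gbinom (z + 1) j = (IZR z + 1) * gbinom z j.
Proof.
  rewrite !gbinom_eq.
  assert (H1 : falling (z+1) (S j) = falling (z+1) j * (IZR z + 1 - INR j)) by (rewrite falling_Sr, plus_IZR; ring).
  assert (H2 : falling (z+1) (S j) = (IZR z + 1) * falling z j) by (rewrite falling_Sl, plus_IZR; replace (z+1-1)%Z with z by lia; ring).
  assert (E : (IZR z + 1 - INR j) * falling (z+1) j = (IZR z + 1) * falling z j) by (rewrite <- H2, H1; ring).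
  unfold Rdiv. rewrite <- !Rmult_assoc, E. ring.
Qed.

Lemma gbinom_absorb_low z j : INR (S j) * gbinom z (S j) = IZR z * gbinom (z - 1) j.
Proof.
  rewrite !gbinom_eq, falling_Sl, fact_simpl, mult_INR.
  field. split; [apply INR_fact_nz|]. apply not_0_INR. lia.
Qed.

Lemma gbinom_van z j : (0 <= z < Z.of_nat j)%Z -> gbinom z j = 0.
Proof.
  induction j; intros H; [lia|].
  rewrite gbinom_Sr. destruct (Z.eq_dec z (Z.of_nat j)).
  - subst. rewrite <- INR_IZR_INZ. unfold Rdiv. ring.
  - rewrite IHj by lia. unfold Rdiv; ring.
Qed.

(* The coefficient of k^m in (k - a)^i is binomZ i (i - m) * (-a)^(i - m). *)
Definition binomZ (z j : Z) : R := if (j <? 0)%Z then 0 else gbinom z (Z.to_nat j).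

Lemma binomZ_neg z j : (j < 0)%Z -> binomZ z j = 0.
Proof. intros; unfold binomZ. destruct (Z.ltb_spec j 0); [reflexivity|lia]. Qed.
Lemma binomZ_nat z j : (0 <= j)%Z -> binomZ z j = gbinom z (Z.to_nat j).
Proof. intros; unfold binomZ. destruct (Z.ltb_spec j 0); [lia|reflexivity]. Qed.
Lemma binomZ_0 z : binomZ z 0 = 1.
Proof. rewrite binomZ_nat by lia. apply gbinom_0. Qed.
Lemma binomZ_van z j : (0 <= z < j)%Z -> binomZ z j = 0.
Proof. intros. rewrite binomZ_nat by lia. apply gbinom_van. lia. Qed.

Lemma binomZ_pascal z j : binomZ (z + 1) j = binomZ z j + binomZ z (j - 1).
Proof.
  destruct (Z_lt_le_dec j 0). { rewrite !binomZ_neg by lia. ring. }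
  destruct (Z.eq_dec j 0). { subst. rewrite !binomZ_0, binomZ_neg by lia. ring. }
  rewrite !binomZ_nat by lia. replace (Z.to_nat j) with (S (Z.to_nat (j - 1))) by lia.
  apply gbinom_pascal.
Qed.

Lemma binomZ_zero_l j : binomZ 0 j = if (j =? 0)%Z then 1 else 0.
Proof.
  destruct (Z.eqb_spec j 0). { subst; apply binomZ_0. }
  destruct (Z_lt_le_dec j 0). { apply binomZ_neg; lia. } apply binomZ_van; lia.
Qed.

Lemma binomZ_absorb z j : (IZR z + 1 - IZR j) * binomZ (z + 1) j = (IZR z + 1) * binomZ z j.
Proof.
  destruct (Z_lt_le_dec j 0). { rewrite !binomZ_neg by lia. ring. }
  rewrite !binomZ_nat by lia. rewrite <- gbinom_absorb. rewrite INR_IZR_INZ. rewrite Z2Nat.id by lia. ring.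
Qed.

Lemma binomZ_derive_pow (i m : Z) (A : R) : (m <= i)%Z ->
  binomZ i (i - m) * INR (Z.to_nat (i - m)) * A ^ Nat.pred (Z.to_nat (i - m))
  = IZR i * binomZ (i - 1) (i - 1 - m) * A ^ Z.to_nat (i - 1 - m).
Proof.
  intros H. destruct (Z.eq_dec i m).
  - subst. replace (m - m)%Z with 0%Z by lia. rewrite (binomZ_neg (m - 1)) by lia. simpl. ring.
  - rewrite !binomZ_nat by lia. replace (Z.to_nat (i - m)) with (S (Z.to_nat (i - 1 - m))) by lia.
    simpl Nat.pred. rewrite <- (gbinom_absorb_low i). ring.
Qed.

Lemma pow_Z2Nat_add (A : R) u v : (0 <= u)%Z -> (0 <= v)%Z -> A ^ Z.to_nat u * A ^ Z.to_nat v = A ^ Z.to_nat (u + v).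
Proof. intros. rewrite <- pow_add. f_equal. lia. Qed.

Definition vdm_sum (x y J : Z) : R := sumZ 0 (Z.to_nat (J + 1)) (fun r => binomZ x r * binomZ y (J - r)).

Lemma vdm_sum_supported x y J : supported_in (fun r => binomZ x r * binomZ y (J - r)) 0 J.
Proof. intros r Hr. destruct Hr. - rewrite binomZ_neg by lia; ring. - rewrite (binomZ_neg y) by lia; ring. Qed.

Lemma vdm_sum_window x y J lo n : (lo <= 0)%Z -> (J < lo + Z.of_nat n)%Z ->
  sumZ lo n (fun r => binomZ x r * binomZ y (J - r)) = vdm_sum x y J.
Proof. intros. unfold vdm_sum. apply (sumZ_supported_indep _ 0 J); auto using vdm_sum_supported; lia. Qed.

Lemma vdm_sum_neg x y J : (J < 0)%Z -> vdm_sum x y J = 0.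
Proof. intros. unfold vdm_sum. replace (Z.to_nat (J+1)) with 0%nat by lia. reflexivity. Qed.

Lemma vdm_sum_succ x y J : vdm_sum (x + 1) y J = vdm_sum x y J + vdm_sum x y (J - 1).
Proof.
  destruct (Z_lt_le_dec J 0). { rewrite !vdm_sum_neg by lia. ring. }
  unfold vdm_sum at 1. rewrite (sumZ_ext _ _ _ (fun r => binomZ x r * binomZ y (J - r) + binomZ x (r - 1) * binomZ y (J - r))).
  2:{ intros. rewrite binomZ_pascal. ring. }
  rewrite sumZ_plus. rewrite (vdm_sum_window x y J 0) by lia. f_equal.
  rewrite <- (vdm_sum_window x y (J - 1) (-1) (Z.to_nat (J + 1))) by lia.
  replace (-1)%Z with (0 + -1)%Z by lia. rewrite <- sumZ_shift. apply sumZ_ext. intros r _.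
  replace (r + -1)%Z with (r - 1)%Z by lia. replace (J - 1 - (r - 1))%Z with (J - r)%Z by lia. reflexivity.
Qed.

Lemma vdm_sum_0l y J : vdm_sum 0 y J = binomZ y J.
Proof.
  destruct (Z_lt_le_dec J 0). { rewrite vdm_sum_neg, binomZ_neg by lia. reflexivity. }
  unfold vdm_sum. rewrite (sumZ_supported _ 0 0).
  - replace (Z.to_nat (0 - 0 + 1)) with 1%nat by lia. rewrite sumZ_S, sumZ_0, binomZ_0. rewrite Z.sub_0_r. ring.
  - intros r Hr. rewrite binomZ_zero_l. destruct (Z.eqb_spec r 0); [lia|ring].
  - lia.
  - lia.
Qed.

Lemma vandermonde x y J : vdm_sum x y J = binomZ (x + y) J.
Proof.
  revert J.
  induction x as [|p IHx|p IHx] using Z.peano_ind.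
  - intros J. rewrite vdm_sum_0l. reflexivity.
  - intros J. replace (Z.succ p) with (p + 1)%Z by lia. rewrite vdm_sum_succ, !IHx. replace (p + 1 + y)%Z with ((p + y) + 1)%Z by lia.
    rewrite binomZ_pascal. reflexivity.
  -
    intros J. assert (HJ : forall k : nat, vdm_sum (Z.pred p) y (Z.of_nat k - 1) = binomZ (Z.pred p + y) (Z.of_nat k - 1)).
    { induction k.
      - rewrite vdm_sum_neg, binomZ_neg by lia. reflexivity.
      - assert (E := vdm_sum_succ (Z.pred p) y (Z.of_nat (S k) - 1)).
        replace (Z.pred p + 1)%Z with p in E by lia. rewrite IHx in E.
        replace (Z.of_nat (S k) - 1 - 1)%Z with (Z.of_nat k - 1)%Z in E by lia. rewrite IHk in E.
        assert (E2 := binomZ_pascal (Z.pred p + y) (Z.of_nat (S k) - 1)).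
        replace (Z.pred p + y + 1)%Z with (p + y)%Z in E2 by lia.
        replace (Z.of_nat (S k) - 1 - 1)%Z with (Z.of_nat k - 1)%Z in E2 by lia. lra. }
    destruct (Z_lt_le_dec J 0). { rewrite vdm_sum_neg, binomZ_neg by lia. reflexivity. }
    replace J with (Z.of_nat (Z.to_nat (J + 1)) - 1)%Z by lia. apply HJ.
Qed.

Lemma vandermonde_pow i l m lo n (A : R) : (lo <= m - l)%Z -> (i < lo + Z.of_nat n)%Z ->
  sumZ lo n (fun p => binomZ i (i - p) * A ^ Z.to_nat (i - p) * (binomZ l (l - (m - p)) * A ^ Z.to_nat (l - (m - p))))
  = binomZ (i + l) (i + l - m) * A ^ Z.to_nat (i + l - m).
Proof.
  intros H1 H2.
  rewrite (sumZ_ext _ _ _ (fun p => A ^ Z.to_nat (i + l - m) * (binomZ i (i - p) * binomZ l (i + l - m - (i - p))))).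
  2:{ intros p _. replace (i + l - m - (i - p))%Z with (l - (m - p))%Z by lia.
      destruct (Z_lt_le_dec (i - p) 0). { rewrite binomZ_neg by lia. ring. }
      destruct (Z_lt_le_dec (l - (m - p)) 0). { rewrite (binomZ_neg l) by lia. ring. }
      replace (Z.to_nat (i + l - m)) with (Z.to_nat (i - p + (l - (m - p)))) by (f_equal; lia).
      rewrite <- (pow_Z2Nat_add A (i - p) (l - (m - p))) by lia. ring. }
  rewrite sumZ_scal. rewrite Rmult_comm. f_equal.
  rewrite (sumZ_reflect_eq lo n i _ (fun r => binomZ i r * binomZ l (i + l - m - r))).
  - rewrite vdm_sum_window by lia. apply vandermonde.
  - intros j _. replace (i + l - m - (i - j))%Z with (i + l - m - (i - j))%Z by lia. reflexivity.
Qed.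

(** * The substitution k -> k - a *)

Lemma coef_sshift_window f a df m lo n s x t : deg_le f df -> (lo <= m)%Z -> (df < lo + Z.of_nat n)%Z ->
  coef (sshift f a) m s x t = sumZ lo n (fun i => coef f i s x t * binomZ i (i - m) * (- a s x t) ^ Z.to_nat (i - m)).
Proof.
  intros Hf H1 H2.
  assert (Hs : supported_in (fun i => coef f i s x t * binomZ i (i - m) * (- a s x t) ^ Z.to_nat (i - m)) m (Z.min df (sdeg f))).
  { intros i Hi. destruct (Z_lt_le_dec i m).
    - rewrite binomZ_neg by lia. ring.
    - destruct (Z_lt_le_dec df i).
      + rewrite (Hf i) by lia. ring.
      + rewrite (coef_hi f i) by lia. ring. }
  unfold coef at 1; simpl. destruct (Z.leb_spec m (sdeg f)).
  - rewrite (sumZ_shift_eq 0 _ m _ (fun i => coef f i s x t * binomZ i (i - m) * (- a s x t) ^ Z.to_nat (i - m))).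
    + apply (sumZ_supported_indep _ _ _ _ _ _ _ Hs); lia.
    + intros j Hj. replace (j + m - m)%Z with j by lia. rewrite binomZ_nat by lia.
      replace (j + m)%Z with (m + j)%Z by lia. reflexivity.
  - unfold zeroF. symmetry. apply sumZ_zero. intros j Hj. apply Hs. lia.
Qed.

Lemma deg_le_sshift f a d : deg_le f d -> deg_le (sshift f a) d.
Proof.
  intros Hf m Hm s x t. rewrite (coef_sshift_window f a d m m 0) by (auto; lia). reflexivity.
Qed.

Lemma coef_sshift_top f a d s x t : deg_le f d -> coef (sshift f a) d s x t = coef f d s x t.
Proof.
  intros Hf. rewrite (coef_sshift_window f a d d d 1) by (auto; lia). rewrite sumZ_S, sumZ_0.
  replace (d - d)%Z with 0%Z by lia. rewrite binomZ_0. simpl. ring.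
Qed.

#[global] Instance sshift_Proper : Proper (ser_eq ==> eq ==> ser_eq) sshift.
Proof.
  intros f f' Hf a a' <- m s x t.
  assert (H' : deg_le f' (sdeg f)) by (apply (deg_le_eq f); auto; apply deg_le_sdeg).
  rewrite (coef_sshift_window f a (sdeg f) m m (Z.to_nat (sdeg f - m + 1))) by (try apply deg_le_sdeg; lia).
  rewrite (coef_sshift_window f' a (sdeg f) m m (Z.to_nat (sdeg f - m + 1))) by (auto; lia).
  apply sumZ_ext. intros. rewrite Hf. reflexivity.
Qed.

Lemma sshift_add f g a : ser_eq (sshift (sadd f g) a) (sadd (sshift f a) (sshift g a)).
Proof.
  intros m s x t. rewrite coef_sadd. set (d := Z.max (sdeg f) (sdeg g)).
  assert (Hf : deg_le f d) by (apply (deg_le_mono _ (sdeg f)); [apply deg_le_sdeg|lia]).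
  assert (Hg : deg_le g d) by (apply (deg_le_mono _ (sdeg g)); [apply deg_le_sdeg|lia]).
  rewrite (coef_sshift_window (sadd f g) a d m m (Z.to_nat (d - m + 1))) by (try apply deg_le_sadd; auto; lia).
  rewrite (coef_sshift_window f a d m m (Z.to_nat (d - m + 1))) by (auto; lia).
  rewrite (coef_sshift_window g a d m m (Z.to_nat (d - m + 1))) by (auto; lia).
  rewrite <- sumZ_plus. apply sumZ_ext. intros. rewrite coef_sadd. ring.
Qed.

Lemma sshift_opp f a : ser_eq (sshift (sopp f) a) (sopp (sshift f a)).
Proof.
  intros m s x t. rewrite coef_sopp.
  rewrite (coef_sshift_window (sopp f) a (sdeg f) m m (Z.to_nat (sdeg f - m + 1))) by (try apply deg_le_sopp; try apply deg_le_sdeg; lia).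
  rewrite (coef_sshift_window f a (sdeg f) m m (Z.to_nat (sdeg f - m + 1))) by (try apply deg_le_sdeg; lia).
  rewrite <- sumZ_opp. apply sumZ_ext. intros. rewrite coef_sopp. ring.
Qed.

Lemma sshift_sub f g a : ser_eq (sshift (ssub f g) a) (ssub (sshift f a) (sshift g a)).
Proof. unfold ssub. rewrite sshift_add, sshift_opp. reflexivity. Qed.

Lemma sshift_monoS0 c a : ser_eq (sshift (monoS 0 c) a) (monoS 0 c).
Proof.
  intros m s x t. rewrite coef_monoS. destruct (Z_lt_le_dec 0 m).
  - rewrite (deg_le_sshift _ a 0 (deg_le_monoS 0 c)) by lia. destruct (Z.eqb_spec m 0); [lia|reflexivity].
  - rewrite (coef_sshift_window (monoS 0 c) a 0 m m (Z.to_nat (1 - m))) by (try apply deg_le_monoS; lia).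
    rewrite (sumZ_supported1 _ 0). 2:{ intros i Hi; rewrite coef_monoS; destruct (Z.eqb_spec i 0); [lia|ring]. }
    2,3: lia.
    rewrite coef_monoS, Z.eqb_refl, binomZ_zero_l.
    destruct (Z.eqb_spec (0 - m) 0), (Z.eqb_spec m 0); try lia; subst; simpl; ring.
Qed.

Lemma sshift_sone a : ser_eq (sshift sone a) sone.
Proof. apply sshift_monoS0. Qed.

Lemma sshift_mul f g a : ser_eq (sshift (smul f g) a) (smul (sshift f a) (sshift g a)).
Proof.
  intros m s x t. set (A := - a s x t).
  set (df := sdeg f). set (dg := sdeg g).
  assert (Hf : deg_le f df) by apply deg_le_sdeg.
  assert (Hg : deg_le g dg) by apply deg_le_sdeg.
  set (NN := Z.to_nat (df + dg - m + 1)).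
  set (NI := Z.to_nat (df - (m - dg) + 1)).
  set (NL := Z.to_nat (dg - (m - df) + 1)).
  rewrite (coef_sshift_window (smul f g) a (df + dg) m m NN) by (try apply deg_le_smul; auto; unfold NN; lia).
  rewrite (sumZ_ext _ _ _ (fun n' => sumZ (m - dg) NI (fun i => coef f i s x t * coef g (n' - i) s x t * (binomZ n' (n' - m) * A ^ Z.to_nat (n' - m))))).
  2:{ intros n' Hn. cbv beta. rewrite sumZ_scalr. rewrite (coef_smul_window f g df dg n' (m - dg) NI) by (auto; unfold NI; lia). fold A. ring. }
  rewrite sumZ_exchange.
  rewrite (coef_smul_window (sshift f a) (sshift g a) df dg m (m - dg) NI) by (try apply deg_le_sshift; auto; unfold NI; lia).
  rewrite (sumZ_ext (m - dg) NI (fun p => coef (sshift f a) p s x t * coef (sshift g a) (m - p) s x t) (fun p => sumZ (m - dg) NI (fun i => sumZ (m - df) NL (fun l =>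
      coef f i s x t * binomZ i (i - p) * A ^ Z.to_nat (i - p) * (coef g l s x t * binomZ l (l - (m - p)) * A ^ Z.to_nat (l - (m - p))))))).
  2:{ intros p Hp. cbv beta. rewrite (coef_sshift_window f a df p (m - dg) NI) by (auto; unfold NI; lia).
      rewrite (coef_sshift_window g a dg (m - p) (m - df) NL) by (auto; unfold NL; lia).
      rewrite sumZ_mul_sumZ. reflexivity. }
  rewrite (sumZ_exchange (m - dg) NI (m - dg) NI). apply sumZ_ext. intros i Hi.
  rewrite sumZ_exchange.
  rewrite (sumZ_ext (m - df) NL _ (fun l => coef f i s x t * (coef g l s x t * (binomZ (i + l) (i + l - m) * A ^ Z.to_nat (i + l - m))))).
  2:{ intros l Hl. cbv beta. rewrite <- (vandermonde_pow i l m (m - dg) NI A) by (unfold NI, NL in *; lia).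
      rewrite <- sumZ_scal, <- sumZ_scal. apply sumZ_ext. intros. ring. }
  assert (E : forall F, sumZ m NN F = sumZ (m - i) NN (fun l => F (l + i)%Z)).
  { intros F. rewrite sumZ_shift. f_equal. lia. }
  rewrite E.
  transitivity (sumZ (m - i) NN (fun l => coef f i s x t * (coef g l s x t * (binomZ (i + l) (i + l - m) * A ^ Z.to_nat (i + l - m))))).
  { apply sumZ_ext. intros l _. replace (l + i - i)%Z with l by lia. replace (l + i)%Z with (i + l)%Z by lia. ring. }
  apply (sumZ_supported_indep _ (m - i) dg).
  - intros l Hl. destruct Hl.
    + rewrite binomZ_neg by lia. ring.
    + rewrite (Hg l) by lia. ring.
  - lia.
  - unfold NN, NI in *. lia.
  - unfold NI in *. lia.
  - unfold NL, NI in *. lia.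
Qed.

Lemma sshift_spow f a n : ser_eq (sshift (spow f n) a) (spow (sshift f a) n).
Proof.
  induction n.
  - apply sshift_sone.
  - rewrite !spow_S, sshift_mul, IHn. reflexivity.
Qed.

Lemma sdk_sshift f a : ser_eq (sdk (sshift f a)) (sshift (sdk f) a).
Proof.
  intros m s x t. rewrite coef_sdk. set (d := sdeg f).
  assert (Hf : deg_le f d) by apply deg_le_sdeg.
  set (N := Z.to_nat (d - m)).
  rewrite (coef_sshift_window f a d (m + 1) (m + 1) N) by (auto; unfold N; lia).
  rewrite (coef_sshift_window (sdk f) a (d - 1) m m N) by (try apply deg_le_sdk; auto; unfold N; lia).
  rewrite (sumZ_shift_eq m N 1 _ (fun i => IZR i * coef f i s x t * binomZ (i - 1) (i - 1 - m) * (- a s x t) ^ Z.to_nat (i - 1 - m))).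
  2:{ intros j _. rewrite coef_sdk. replace (j + 1 - 1)%Z with j by lia. ring. }
  rewrite <- sumZ_scal. apply sumZ_ext. intros i Hi.
  replace (i - 1 - m)%Z with (i - (m + 1))%Z by lia.
  assert (E := binomZ_absorb (i - 1) (i - (m + 1))). replace (i - 1 + 1)%Z with i in E by lia.
  replace (IZR (i - 1) + 1 - IZR (i - (m + 1))) with (IZR m + 1) in E by (rewrite !minus_IZR, plus_IZR; simpl; ring).
  replace (IZR (i - 1) + 1) with (IZR i) in E by (rewrite !minus_IZR; simpl; ring).
  rewrite plus_IZR. simpl (IZR 1).
  transitivity ((IZR m + 1) * binomZ i (i - (m + 1)) * (coef f i s x t * (- a s x t) ^ Z.to_nat (i - (m + 1)))).
  { ring. } rewrite E. ring.
Qed.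

(** * Regularity and derivations *)

Lemma regular_ext f g : (forall s x t, f s x t = g s x t) -> regular f -> regular g.
Proof. intros E H. rewrite <- (fn_ext f g E). exact H. Qed.

Lemma regular_op2 (op : R -> R -> R)
  (Hop : forall (F G : R -> R) y, ex_derive F y -> ex_derive G y -> ex_derive (fun z => op (F z) (G z)) y)
  f g : regular f -> regular g -> regular (fun s x t => op (f s x t) (g s x t)).
Proof.
  intros Hf Hg s x t. destruct (Hf s x t) as (A1&A2&A3), (Hg s x t) as (B1&B2&B3).
  split; [|split]; [apply Hop; auto | apply Hop; auto | intros m; apply Hop; auto].
Qed.

Lemma regular_op1 (op : R -> R)
  (Hop : forall (F : R -> R) y, ex_derive F y -> ex_derive (fun z => op (F z)) y)
  f : regular f -> regular (fun s x t => op (f s x t)).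
Proof.
  intros Hf s x t. destruct (Hf s x t) as (A1&A2&A3).
  split; [|split]; [apply Hop; auto | apply Hop; auto | intros m; apply Hop; auto].
Qed.

Lemma regular_plus f g : regular f -> regular g -> regular (fun s x t => f s x t + g s x t).
Proof. apply regular_op2. intros. apply (ex_derive_plus F G); auto. Qed.
Lemma regular_mult f g : regular f -> regular g -> regular (fun s x t => f s x t * g s x t).
Proof. apply regular_op2. intros. apply (ex_derive_mult F G); auto. Qed.
Lemma regular_opp f : regular f -> regular (fun s x t => - f s x t).
Proof. apply (regular_op1 (fun z => - z)). intros. apply (ex_derive_opp F); auto. Qed.
Lemma regular_pow f n : regular f -> regular (fun s x t => f s x t ^ n).
Proof. apply (regular_op1 (fun z => z ^ n)). intros. apply (ex_derive_pow F); auto. Qed.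
Lemma regular_scal c f : regular f -> regular (fun s x t => c * f s x t).
Proof. apply (regular_op1 (fun z => c * z)). intros. apply (ex_derive_scal F); auto. Qed.
Lemma regular_const c : regular (fun _ _ _ => c).
Proof. intros s x t. split; [|split]; [apply ex_derive_const|apply ex_derive_const|intros; apply ex_derive_const]. Qed.
Lemma regular_zeroF : regular zeroF.
Proof. apply regular_const. Qed.
Lemma regular_constF c : regular (constF c).
Proof. apply regular_const. Qed.

Lemma regular_inv f : regular f -> (forall s x t, f s x t <> 0) -> regular (fun s x t => / f s x t).
Proof.
  intros Hf Hn s x t. destruct (Hf s x t) as (A1&A2&A3).
  split; [|split]; [apply ex_derive_inv; auto | apply ex_derive_inv; auto | intros m; apply ex_derive_inv; auto].
Qed.

Lemma regular_sumZ lo n (F : Z -> Defs.Fn) : (forall j, regular (F j)) ->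
  regular (fun s x t => sumZ lo n (fun j => F j s x t)).
Proof.
  intros H. revert lo; induction n; intros lo.
  - apply (regular_ext (fun _ _ _ => 0)); [intros; reflexivity|apply regular_const].
  - apply (regular_ext (fun s x t => F lo s x t + sumZ (lo + 1) n (fun j => F j s x t))).
    + intros. rewrite sumZ_S. reflexivity.
    + apply regular_plus; auto.
Qed.

Record derivation (D : Defs.Fn -> Defs.Fn) : Prop := {
  D_const : forall c s x t, D (fun _ _ _ => c) s x t = 0;
  D_plus : forall f g, regular f -> regular g -> forall s x t,
      D (fun s x t => f s x t + g s x t) s x t = D f s x t + D g s x t;
  D_mult : forall f g, regular f -> regular g -> forall s x t,
      D (fun s x t => f s x t * g s x t) s x t = D f s x t * g s x t + f s x t * D g s x t;
  D_scal : forall c f s x t, D (fun s x t => c * f s x t) s x t = c * D f s x t;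
  D_opp : forall f s x t, D (fun s x t => - f s x t) s x t = - D f s x t;
  D_pow : forall f n, regular f -> forall s x t,
      D (fun s x t => f s x t ^ n) s x t = INR n * D f s x t * f s x t ^ Nat.pred n;
  D_inv : forall f, regular f -> (forall s x t, f s x t <> 0) -> forall s x t,
      D (fun s x t => / f s x t) s x t = - D f s x t / (f s x t) ^ 2;
  D_ln : forall f, regular f -> (forall s x t, f s x t <> 0) -> forall s x t,
      D (fun s x t => ln (Rabs (f s x t))) s x t = D f s x t / f s x t
}.

Lemma Derive_ln_abs (F : R -> R) y : ex_derive F y -> F y <> 0 ->
  Derive (fun z => ln (Rabs (F z))) y = Derive F y / F y.
Proof.
  intros H Hn. apply is_derive_unique.
  assert (HF : is_derive F y (Derive F y)) by (apply Derive_correct; auto).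
  assert (HA := is_derive_Rabs F y _ HF Hn).
  assert (Hp : 0 < Rabs (F y)) by (apply Rabs_pos_lt; auto).
  assert (HL := is_derive_ln _ Hp).
  assert (HC := is_derive_comp ln (fun z => Rabs (F z)) y _ _ HL HA).
  replace (Derive F y / F y) with (scal (sign (F y) * Derive F y) (/ Rabs (F y))); auto.
  unfold scal; simpl; unfold mult; simpl.
  destruct (Rlt_or_le 0 (F y)).
  - rewrite sign_eq_1, Rabs_pos_eq by lra. field; auto.
  - rewrite sign_eq_m1, Rabs_left by lra. field; auto.
Qed.

Ltac derivation_tac :=
  constructor;
  [ intros; apply Derive_const
  | intros f g Hf Hg s x t; destruct (Hf s x t) as (?&?&?), (Hg s x t) as (?&?&?); apply Derive_plus; auto
  | intros f g Hf Hg s x t; destruct (Hf s x t) as (?&?&?), (Hg s x t) as (?&?&?); apply Derive_mult; auto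
  | intros; apply Derive_scal
  | intros; apply Derive_opp
  | intros f n Hf s x t; destruct (Hf s x t) as (?&?&?); apply Derive_pow; auto
  | intros f Hf Hn s x t; destruct (Hf s x t) as (?&?&?); apply Derive_inv; auto
  | intros f Hf Hn s x t; destruct (Hf s x t) as (?&?&?); apply Derive_ln_abs; auto ].

Lemma derivation_dS : derivation dS.
Proof. unfold dS. derivation_tac. Qed.
Lemma derivation_dX : derivation dX.
Proof. unfold dX. derivation_tac. Qed.

Lemma upd_same t m : upd t m (t m) = t.
Proof. apply functional_extensionality. intros k. unfold upd. destruct (Nat.eqb_spec k m); subst; auto. Qed.

Lemma derivation_dT n : derivation (dT n).
Proof.
  unfold dT. constructor.
  - intros; apply Derive_const.
  - intros f g Hf Hg s x t. destruct (Hf s x t) as (?&?&A1), (Hg s x t) as (?&?&B1). apply Derive_plus; auto.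
  - intros f g Hf Hg s x t. destruct (Hf s x t) as (?&?&A1), (Hg s x t) as (?&?&B1). rewrite Derive_mult; auto. rewrite upd_same. reflexivity.
  - intros; apply Derive_scal.
  - intros; apply Derive_opp.
  - intros f k Hf s x t. destruct (Hf s x t) as (?&?&A1). rewrite Derive_pow; auto. cbv beta. rewrite upd_same. reflexivity.
  - intros f Hf Hn s x t. destruct (Hf s x t) as (?&?&A1). rewrite Derive_inv; [cbv beta; rewrite upd_same; reflexivity|auto|cbv beta; rewrite upd_same; auto].
  - intros f Hf Hn s x t. destruct (Hf s x t) as (?&?&A1). rewrite Derive_ln_abs; [cbv beta; rewrite upd_same; reflexivity|auto|cbv beta; rewrite upd_same; auto].
Qed.

Lemma regular_ser_eq f g : ser_eq f g -> regular_ser f -> regular_ser g.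
Proof. intros E H i. rewrite <- (coef_fun_eq f g E). auto. Qed.
Lemma regular_ser_sadd f g : regular_ser f -> regular_ser g -> regular_ser (sadd f g).
Proof. intros Hf Hg i. apply (regular_ext (fun s x t => coef f i s x t + coef g i s x t)). intros; rewrite coef_sadd; auto. apply regular_plus; auto. Qed.
Lemma regular_ser_sopp f : regular_ser f -> regular_ser (sopp f).
Proof. intros Hf i. apply (regular_ext (fun s x t => - coef f i s x t)). intros; rewrite coef_sopp; auto. apply regular_opp; auto. Qed.
Lemma regular_ser_ssub f g : regular_ser f -> regular_ser g -> regular_ser (ssub f g).
Proof. intros; apply regular_ser_sadd; auto; apply regular_ser_sopp; auto. Qed.
Lemma regular_ser_sscale c f : regular c -> regular_ser f -> regular_ser (sscale c f).
Proof. intros Hc Hf i. apply (regular_ext (fun s x t => c s x t * coef f i s x t)). intros; rewrite coef_sscale; auto. apply regular_mult; auto. Qed.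
Lemma regular_ser_monoS d c : regular c -> regular_ser (monoS d c).
Proof. intros Hc i. apply (regular_ext (if Z.eqb i d then c else zeroF)). intros; rewrite coef_monoS; destruct (i =? d)%Z; auto. destruct (i =? d)%Z; auto. apply regular_zeroF. Qed.
Lemma regular_ser_sone : regular_ser sone.
Proof. apply regular_ser_monoS, regular_constF. Qed.
Lemma regular_ser_spos f : regular_ser f -> regular_ser (spos f).
Proof. intros Hf i. apply (regular_ext (if (0 <? i)%Z then coef f i else zeroF)). intros; rewrite coef_spos; destruct (0 <? i)%Z; auto. destruct (0 <? i)%Z; auto. apply regular_zeroF. Qed.
Lemma regular_ser_smul f g : regular_ser f -> regular_ser g -> regular_ser (smul f g).
Proof.
  intros Hf Hg m.
  apply (regular_ext (fun s x t => sumZ (m - sdeg g) (Z.to_nat (sdeg f - (m - sdeg g) + 1)) (fun i => (fun s x t => coef f i s x t * coef g (m - i) s x t) s x t))).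
  - intros. rewrite (coef_smul_deg f g (sdeg f) (sdeg g)) by apply deg_le_sdeg. reflexivity.
  - apply regular_sumZ. intros; apply regular_mult; auto.
Qed.
Lemma regular_ser_spow f n : regular_ser f -> regular_ser (spow f n).
Proof. intros Hf. induction n; [apply regular_ser_sone|]. rewrite spow_S. apply regular_ser_smul; auto. Qed.
Lemma regular_ser_sshift f a : regular_ser f -> regular a -> regular_ser (sshift f a).
Proof.
  intros Hf Ha m.
  apply (regular_ext (fun s x t => sumZ m (Z.to_nat (sdeg f - m + 1)) (fun i => (fun s x t => coef f i s x t * binomZ i (i - m) * (- a s x t) ^ Z.to_nat (i - m)) s x t))).
  - intros. rewrite (coef_sshift_window f a (sdeg f) m m (Z.to_nat (sdeg f - m + 1))) by (try apply deg_le_sdeg; lia). reflexivity.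
  - apply regular_sumZ. intros i. apply regular_mult; [apply regular_mult; auto; apply regular_const|].
    apply regular_pow, regular_opp; auto.
Qed.

Section CoefficientwiseDerivation.
Variable Dr : Defs.Fn -> Defs.Fn.
Hypothesis HD : derivation Dr.

Lemma D_zeroF : Dr zeroF = zeroF.
Proof. apply fn_ext. intros. apply (D_const _ HD 0). Qed.

Lemma D_ext f g : (forall s x t, f s x t = g s x t) -> Dr f = Dr g.
Proof. intros H. rewrite (fn_ext f g H). reflexivity. Qed.

Lemma D_sum lo n (F : Z -> Defs.Fn) : (forall j, regular (F j)) -> forall s x t,
  Dr (fun s x t => sumZ lo n (fun j => F j s x t)) s x t = sumZ lo n (fun j => Dr (F j) s x t).
Proof.
  intros H. revert lo; induction n; intros lo s x t.
  - unfold sumZ; simpl. apply (D_const _ HD 0).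
  - rewrite (D_ext _ (fun s x t => F lo s x t + sumZ (lo + 1) n (fun j => F j s x t))) by (intros; apply sumZ_S).
    rewrite (D_plus _ HD); auto. rewrite IHn, sumZ_S. reflexivity. apply regular_sumZ; auto.
Qed.

Lemma deg_le_smap f d : deg_le f d -> deg_le (smap Dr f) d.
Proof.
  intros Hf i Hi s x t. rewrite coef_smap by apply D_zeroF.
  rewrite (D_ext _ zeroF) by (intros; apply Hf; auto). rewrite D_zeroF. reflexivity.
Qed.

Lemma smap_add f g : regular_ser f -> regular_ser g -> ser_eq (smap Dr (sadd f g)) (sadd (smap Dr f) (smap Dr g)).
Proof.
  intros Hf Hg i s x t. rewrite coef_sadd, !coef_smap by apply D_zeroF.
  rewrite (D_ext _ (fun s x t => coef f i s x t + coef g i s x t)) by (intros; apply coef_sadd).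
  apply (D_plus _ HD); auto.
Qed.

Lemma smap_opp f : ser_eq (smap Dr (sopp f)) (sopp (smap Dr f)).
Proof.
  intros i s x t. rewrite coef_sopp, !coef_smap by apply D_zeroF.
  rewrite (D_ext _ (fun s x t => - coef f i s x t)) by (intros; apply coef_sopp).
  apply (D_opp _ HD).
Qed.

Lemma smap_monoS d c : ser_eq (smap Dr (monoS d c)) (monoS d (Dr c)).
Proof.
  intros i s x t. rewrite coef_smap, !coef_monoS by apply D_zeroF.
  destruct (Z.eqb_spec i d).
  - rewrite (D_ext _ c); auto. intros; rewrite coef_monoS. destruct (Z.eqb_spec i d); tauto.
  - rewrite (D_ext _ zeroF). rewrite D_zeroF; reflexivity. intros; rewrite coef_monoS. destruct (Z.eqb_spec i d); tauto.
Qed.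

Lemma smap_sscale c f : regular c -> regular_ser f ->
  ser_eq (smap Dr (sscale c f)) (sadd (sscale (Dr c) f) (sscale c (smap Dr f))).
Proof.
  intros Hc Hf i s x t. rewrite coef_sadd, !coef_sscale, !coef_smap by apply D_zeroF.
  rewrite (D_ext _ (fun s x t => c s x t * coef f i s x t)) by (intros; apply coef_sscale).
  apply (D_mult _ HD); auto.
Qed.

Lemma smap_mul f g : regular_ser f -> regular_ser g ->
  ser_eq (smap Dr (smul f g)) (sadd (smul (smap Dr f) g) (smul f (smap Dr g))).
Proof.
  intros Hf Hg m s x t. rewrite coef_sadd, coef_smap by apply D_zeroF.
  rewrite (D_ext _ (fun s x t => sumZ (m - sdeg g) (Z.to_nat (sdeg f - (m - sdeg g) + 1)) (fun i => (fun s x t => coef f i s x t * coef g (m - i) s x t) s x t))).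
  2:{ intros. rewrite (coef_smul_deg f g (sdeg f) (sdeg g)) by apply deg_le_sdeg. reflexivity. }
  rewrite D_sum by (intros; apply regular_mult; auto).
  rewrite (coef_smul_deg (smap Dr f) g (sdeg f) (sdeg g)) by (try apply deg_le_smap; apply deg_le_sdeg).
  rewrite (coef_smul_deg f (smap Dr g) (sdeg f) (sdeg g)) by (try apply deg_le_smap; apply deg_le_sdeg).
  rewrite <- sumZ_plus. apply sumZ_ext. intros i _. rewrite (D_mult _ HD); auto. rewrite !coef_smap by apply D_zeroF. reflexivity.
Qed.

End CoefficientwiseDerivation.

Definition agree_from (M : Z) (f g : ser) : Prop :=
  forall i, (M <= i)%Z -> forall s x t, coef f i s x t = coef g i s x t.

(* Abstracts [sdk] and coefficientwise derivations [smap D], defined on a subring [ok]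
   (regular series for [smap D]); [sd_agree] says that the coefficients of degree >= M of
   [d f] only depend on those of [f]. *)
Record ser_derivation (d : ser -> ser) (ok : ser -> Prop) : Prop := {
  sd_proper : forall f g, ser_eq f g -> ser_eq (d f) (d g);
  sd_add : forall f g, ok f -> ok g -> ser_eq (d (sadd f g)) (sadd (d f) (d g));
  sd_opp : forall f, ok f -> ser_eq (d (sopp f)) (sopp (d f));
  sd_mul : forall f g, ok f -> ok g -> ser_eq (d (smul f g)) (sadd (smul (d f) g) (smul f (d g)));
  sd_cst : forall c, ser_eq (d (monoS 0 (constF c))) szero;
  ok_eq : forall f g, ser_eq f g -> ok f -> ok g;
  ok_add : forall f g, ok f -> ok g -> ok (sadd f g);
  ok_opp : forall f, ok f -> ok (sopp f);
  ok_mul : forall f g, ok f -> ok g -> ok (smul f g);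
  ok_cst : forall c, ok (monoS 0 (constF c));
  sd_deg : forall f k, deg_le f k -> deg_le (d f) k;
  sd_agree : forall f g M, agree_from M f g -> agree_from M (d f) (d g)
}.

Lemma ser_derivation_sdk : ser_derivation sdk (fun _ => True).
Proof.
  constructor; auto.
  - intros; apply sdk_Proper; auto.
  - intros; apply sdk_add.
  - intros; apply sdk_opp.
  - intros; apply sdk_mul.
  - intros c. rewrite sdk_monoS. intros i s x t. rewrite coef_monoS, coef_szero. destruct (_ =? _)%Z; simpl; ring.
  - intros f k H. apply (deg_le_mono _ (k - 1)); [apply deg_le_sdk; auto|lia].
  - intros f g M H i Hi s x t. rewrite !coef_sdk, H by lia. reflexivity.
Qed.

Lemma ser_derivation_smap Dr : derivation Dr -> ser_derivation (smap Dr) regular_ser.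
Proof.
  intros HD. constructor.
  - intros; apply smap_eq; auto using D_zeroF.
  - intros; apply smap_add; auto.
  - intros; apply smap_opp; auto.
  - intros; apply smap_mul; auto.
  - intros c. rewrite smap_monoS by auto. intros i s x t. rewrite coef_monoS, coef_szero.
    destruct (_ =? _)%Z; auto. apply (D_const _ HD c).
  - apply regular_ser_eq.
  - apply regular_ser_sadd.
  - apply regular_ser_sopp.
  - apply regular_ser_smul.
  - intros; apply regular_ser_monoS, regular_constF.
  - intros; apply deg_le_smap; auto.
  - intros f g M H i Hi s x t. rewrite !coef_smap by (apply D_zeroF; auto).
    rewrite (D_ext Dr (coef f i) (coef g i)) by (intros; apply H; auto). reflexivity.
Qed.

Definition cst (c : R) : ser := monoS 0 (constF c).

Lemma cst_add a b : ser_eq (sadd (cst a) (cst b)) (cst (a + b)).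
Proof. unfold cst. rewrite monoS_add. apply monoS_ext. intros; reflexivity. Qed.
Lemma cst_mul a b : ser_eq (smul (cst a) (cst b)) (cst (a * b)).
Proof. unfold cst. rewrite monoS_mul. apply monoS_ext. intros; reflexivity. Qed.
Lemma cst_1 : ser_eq (cst 1) sone.
Proof. reflexivity. Qed.
Lemma cst_0 : ser_eq (cst 0) szero.
Proof. unfold cst. apply monoS_zero. Qed.
Lemma cst_opp c : ser_eq (cst (- c)) (sopp (cst c)).
Proof. unfold cst. rewrite monoS_opp. apply monoS_ext. intros; reflexivity. Qed.

Section SerDerivation.
Variables (d : ser -> ser) (ok : ser -> Prop).
Hypothesis Hd : ser_derivation d ok.

Lemma ok_spow f n : ok f -> ok (spow f n).
Proof. intros Hf. induction n; [apply (ok_cst _ _ Hd 1)|]. rewrite spow_S. apply (ok_mul _ _ Hd); auto. Qed.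

Lemma sd_spow f n : ok f -> ser_eq (d (spow f (S n))) (smul (cst (INR (S n))) (smul (spow f n) (d f))).
Proof.
  intros Hf. induction n.
  - rewrite spow_S, (sd_mul _ _ Hd) by (auto; apply (ok_cst _ _ Hd 1)). simpl spow.
    assert (E : ser_eq (d sone) szero) by apply (sd_cst _ _ Hd 1). rewrite E.
    change (INR 1) with 1. rewrite cst_1. ring.
  - rewrite spow_S, (sd_mul _ _ Hd) by (auto; apply ok_spow; auto). rewrite IHn.
    rewrite !S_INR. rewrite <- !cst_add, !cst_1. rewrite spow_S. ring.
Qed.

End SerDerivation.

Lemma smap_sshift Dr f a : derivation Dr -> regular_ser f -> regular a ->
  ser_eq (smap Dr (sshift f a)) (ssub (sshift (smap Dr f) a) (smul (monoS 0 (Dr a)) (sshift (sdk f) a))).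
Proof.
  intros HD Hf Ha m s x t. set (d := sdeg f). set (N := Z.to_nat (d - m + 2)).
  assert (Hd : deg_le f d) by apply deg_le_sdeg.
  rewrite coef_smap by apply (D_zeroF _ HD).
  rewrite (D_ext Dr _ (fun s x t => sumZ m N (fun i => (fun s x t => binomZ i (i - m) * (coef f i s x t * (- a s x t) ^ Z.to_nat (i - m))) s x t))).
  2:{ intros. rewrite (coef_sshift_window f a d m m N) by (auto; unfold N; lia). apply sumZ_ext. intros; ring. }
  rewrite (D_sum _ HD).
  2:{ intros i. apply regular_scal, regular_mult; auto. apply regular_pow, regular_opp; auto. }
  rewrite coef_ssub, coef_smul_monoS_l. replace (m - 0)%Z with m by lia.
  rewrite (coef_sshift_window (smap Dr f) a d m m N) by (try apply (deg_le_smap _ HD); auto; unfold N; lia).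
  rewrite (coef_sshift_window (sdk f) a d m (m - 1) N) by (try (apply (deg_le_mono _ (d - 1)); [apply deg_le_sdk; auto|lia]); unfold N; lia).
  replace (m - 1)%Z with (m + -1)%Z by lia.
  rewrite <- sumZ_shift.
  unfold Rminus. rewrite <- sumZ_scal, <- sumZ_opp, <- sumZ_plus. apply sumZ_ext. intros i Hi.
  rewrite (D_scal _ HD), (D_mult _ HD); auto. 2:{ apply regular_pow, regular_opp; auto. }
  rewrite (D_pow _ HD) by (apply regular_opp; auto). rewrite (D_opp _ HD).
  rewrite coef_smap by apply (D_zeroF _ HD). rewrite coef_sdk.
  replace (i + -1 + 1)%Z with i by lia. replace (i + -1 - m)%Z with (i - 1 - m)%Z by lia.
  replace (i + -1)%Z with (i - 1)%Z by lia.
  transitivity (Dr (coef f i) s x t * binomZ i (i - m) * (- a s x t) ^ Z.to_nat (i - m) +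
    - (Dr a s x t * coef f i s x t * (IZR i * binomZ (i - 1) (i - 1 - m) * (- a s x t) ^ Z.to_nat (i - 1 - m)))).
  - rewrite <- (binomZ_derive_pow i m (- a s x t)) by lia. ring.
  - ring.
Qed.

(** * Logarithmic derivatives *)

Lemma smul_cancel0 P Nz Z : deg_le P Nz -> (forall s x t, coef P Nz s x t <> 0) ->
  ser_eq (smul P Z) szero -> ser_eq Z szero.
Proof.
  intros HP Hn HZ.
  assert (K : forall n i, (sdeg Z - i < Z.of_nat n)%Z -> forall s x t, coef Z i s x t = 0).
  { induction n; intros i Hi s x t.
    - apply coef_hi. lia.
    - assert (Hd : deg_le Z i) by (intros j Hj; apply IHn; lia).
      assert (E := coef_smul_top P Z Nz i s x t HP Hd). rewrite HZ, coef_szero in E.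
      symmetry in E. apply Rmult_integral in E. destruct E as [E|E]; auto. exfalso; apply (Hn s x t); auto. }
  intros i s x t. rewrite coef_szero. apply (K (Z.to_nat (sdeg Z - i + 1))). lia.
Qed.

Lemma smul_cancel_l P Nz X Y : deg_le P Nz -> (forall s x t, coef P Nz s x t <> 0) ->
  ser_eq (smul P X) (smul P Y) -> ser_eq X Y.
Proof.
  intros HP Hn E.
  assert (H0 : ser_eq (ssub X Y) szero).
  { apply (smul_cancel0 P Nz); auto. transitivity (ssub (smul P X) (smul P Y)); [ring|].
    rewrite E. apply sopp_def. }
  intros i s x t. assert (H1 := H0 i s x t). rewrite coef_ssub, coef_szero in H1. lra.
Qed.

Lemma agree_from_smul h X Y M : deg_le h 0 -> agree_from M X Y -> agree_from M (smul h X) (smul h Y).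
Proof.
  intros Hh HA i Hi s x t. set (d := Z.max (sdeg X) (sdeg Y)).
  assert (HX : deg_le X d) by (apply (deg_le_mono _ (sdeg X)); [apply deg_le_sdeg|lia]).
  assert (HY : deg_le Y d) by (apply (deg_le_mono _ (sdeg Y)); [apply deg_le_sdeg|lia]).
  rewrite (coef_smul_deg h X 0 d) by auto. rewrite (coef_smul_deg h Y 0 d) by auto.
  apply sumZ_ext. intros j Hj. destruct (Z_le_gt_dec j 0).
  - rewrite HA by lia. reflexivity.
  - rewrite Hh by lia. ring.
Qed.

Definition log_coef (m : nat) : R := (-1) ^ (m + 1) / INR m.

Fixpoint log1p_trunc (q : ser) (M : nat) : ser :=
  match M with
  | O => szero
  | S M' => sadd (log1p_trunc q M') (smul (cst (log_coef (S M'))) (spow q (S M')))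
  end.

Definition logtail_sum (q : ser) (i : Z) (s x : R) (t : nat -> R) (K : nat) : R :=
  fold_right Rplus 0 (map (fun m => (-1) ^ (m + 1) / INR m * coef (spow q m) i s x t) (seq 1 K)).

Lemma fold_right_Rplus_init l c : fold_right Rplus c l = fold_right Rplus 0 l + c.
Proof. induction l; simpl; [ring|]. rewrite IHl. ring. Qed.

Lemma coef_log1p_trunc q M i s x t : coef (log1p_trunc q M) i s x t = logtail_sum q i s x t M.
Proof.
  induction M; simpl.
  - apply coef_szero.
  - rewrite coef_sadd, IHM. unfold cst. rewrite coef_smul_monoS_l. replace (i - 0)%Z with i by lia.
    unfold logtail_sum. rewrite seq_S, map_app, fold_right_app. cbn [map fold_right].
    rewrite (fold_right_Rplus_init _ (_ + 0)).
    unfold log_coef, constF. replace (1 + M)%nat with (S M) by lia. rewrite spow_S, Rplus_0_r. reflexivity.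
Qed.

Lemma logtail_sum_ext q i s x t K : deg_le q (-1) -> (Z.to_nat (- i) <= K)%nat ->
  logtail_sum q i s x t K = logtail_sum q i s x t (Z.to_nat (- i)).
Proof.
  intros Hq HK. unfold logtail_sum. replace K with (Z.to_nat (- i) + (K - Z.to_nat (- i)))%nat by lia.
  rewrite seq_app, map_app, fold_right_app.
  assert (E : fold_right Rplus 0 (map (fun m => (-1) ^ (m + 1) / INR m * coef (spow q m) i s x t)
        (seq (1 + Z.to_nat (- i)) (K - Z.to_nat (- i)))) = 0).
  { generalize (K - Z.to_nat (- i))%nat. intros e.
    assert (Hm : forall m, In m (seq (1 + Z.to_nat (- i)) e) -> (Z.of_nat m > - i)%Z).
    { intros m Hm. apply in_seq in Hm. lia. }
    induction (seq (1 + Z.to_nat (- i)) e) as [|m l IH]; simpl; auto.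
    rewrite IH by (intros; apply Hm; simpl; auto).
    rewrite (deg_le_spow q (-1) m Hq i) by (specialize (Hm m (or_introl eq_refl)); lia). ring. }
  rewrite E. reflexivity.
Qed.

Lemma deg_le_spow_neg q m : deg_le q (-1) -> deg_le (spow q m) (- Z.of_nat m).
Proof. intros Hq. apply (deg_le_mono _ (Z.of_nat m * -1)); [apply deg_le_spow; auto|lia]. Qed.

Lemma logtail_agree_trunc P Nz M : agree_from (- Z.of_nat M) (logtail P Nz) (log1p_trunc (lq P Nz) M).
Proof.
  intros i Hi s x t. rewrite coef_log1p_trunc.
  assert (Hq : deg_le (lq P Nz) (-1)) by apply deg_le_sdeg.
  destruct (Z_le_gt_dec i (-1)).
  - unfold coef at 1; simpl. destruct (Z.leb_spec i (-1)); [|lia].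
    rewrite (logtail_sum_ext _ _ _ _ _ M) by (auto; lia). reflexivity.
  - rewrite coef_hi by (simpl; lia). unfold logtail_sum.
    symmetry. clear Hi. destruct M; [reflexivity|].
    assert (Hm : forall m, In m (seq 1 (S M)) -> (1 <= m)%nat) by (intros m Hm; apply in_seq in Hm; lia).
    induction (seq 1 (S M)) as [|m l IH]; simpl; auto.
    rewrite IH by (intros; apply Hm; simpl; auto).
    rewrite (deg_le_spow_neg _ m Hq i) by (specialize (Hm m (or_introl eq_refl)); lia). ring.
Qed.

Section Log1pDerivation.
Variables (d : ser -> ser) (ok : ser -> Prop).
Hypothesis Hd : ser_derivation d ok.

Lemma sd_cst_mul c X : ok X -> ser_eq (d (smul (cst c) X)) (smul (cst c) (d X)).
Proof.
  intros HX. rewrite (sd_mul _ _ Hd); auto. 2: apply (ok_cst _ _ Hd).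
  assert (E : ser_eq (d (cst c)) szero) by apply (sd_cst _ _ Hd). rewrite E. ring.
Qed.

Lemma ok_log1p_trunc q M : ok q -> ok (log1p_trunc q M).
Proof.
  intros Hq. induction M; simpl.
  - apply (ok_eq _ _ Hd (cst 0)). apply cst_0. apply (ok_cst _ _ Hd).
  - apply (ok_add _ _ Hd); auto. apply (ok_mul _ _ Hd); [apply (ok_cst _ _ Hd)|apply (ok_spow _ _ Hd q (S M)); auto].
Qed.

Lemma log1p_trunc_telescope q M : ok q ->
  ser_eq (smul (sadd sone q) (d (log1p_trunc q M))) (sadd (d q) (smul (cst ((-1) ^ (M + 1))) (smul (spow q M) (d q)))).
Proof.
  intros Hq. induction M.
  - change (log1p_trunc q 0) with szero. assert (E : ser_eq (d szero) szero).
    { transitivity (d (cst 0)); [apply (sd_proper _ _ Hd); symmetry; apply cst_0 | apply (sd_cst _ _ Hd)]. }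
    rewrite E. simpl. replace (-1 * 1) with (- (1)) by ring. rewrite cst_opp, cst_1. ring.
  - change (log1p_trunc q (S M)) with (sadd (log1p_trunc q M) (smul (cst (log_coef (S M))) (spow q (S M)))).
    rewrite (sd_add _ _ Hd). 2: apply ok_log1p_trunc; auto.
    2: apply (ok_mul _ _ Hd); [apply (ok_cst _ _ Hd)|apply (ok_spow _ _ Hd q (S M)); auto].
    rewrite sd_cst_mul by (apply (ok_spow _ _ Hd q (S M)); auto).
    rewrite (sd_spow _ _ Hd) by auto.
    transitivity (sadd (smul (sadd sone q) (d (log1p_trunc q M))) (smul (smul (cst (log_coef (S M))) (cst (INR (S M)))) (smul (sadd sone q) (smul (spow q M) (d q))))).
    { ring. }
    rewrite IHM, cst_mul.
    assert (E1 : log_coef (S M) * INR (S M) = - (-1) ^ (M + 1)).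
    { unfold log_coef. replace (S M + 1)%nat with (S (M+1)) by lia. simpl pow. field. apply not_0_INR; lia. }
    assert (E2 : (-1) ^ (S M + 1) = - (-1) ^ (M + 1)).
    { replace (S M + 1)%nat with (S (M+1)) by lia. simpl pow. ring. }
    rewrite E1, E2, !cst_opp. rewrite spow_S. ring.
Qed.

(* In degree i only the truncation of order 1 - i matters, as q^M has degree <= -M. *)
Lemma log1p_derivation q T : ok q -> deg_le q (-1) ->
  (forall M, agree_from (- Z.of_nat M) T (log1p_trunc q M)) ->
  ser_eq (smul (sadd sone q) (d T)) (d q).
Proof.
  intros Hok Hq HA i s x t.
  set (M := S (Z.to_nat (- i))).
  assert (H1 : agree_from (- Z.of_nat M) (d T) (d (log1p_trunc q M))).
  { apply (sd_agree _ _ Hd), HA. }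
  assert (H2 := agree_from_smul (sadd sone q) _ _ _ (deg_le_sadd _ _ _ deg_le_sone (deg_le_mono _ _ 0 Hq ltac:(lia))) H1).
  assert (Hi : (- Z.of_nat M <= i)%Z) by (unfold M; lia). rewrite (H2 i Hi).
  rewrite (log1p_trunc_telescope q M Hok). rewrite coef_sadd. unfold cst. rewrite coef_smul_monoS_l.
  replace (i - 0)%Z with i by lia.
  rewrite (deg_le_smul _ _ (- Z.of_nat M) (-1) (deg_le_spow_neg q M Hq) (sd_deg _ _ Hd _ _ Hq)) by (unfold M; lia).
  ring.
Qed.

End Log1pDerivation.

Lemma coef_lq P Nz j s x t : coef (lq P Nz) j s x t = if (j <=? -1)%Z then coef P (Nz + j) s x t / lead P Nz s x t else 0.
Proof. unfold coef at 1; simpl. destruct (j <=? -1)%Z; reflexivity. Qed.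

Lemma lead_factorization P Nz : deg_le P Nz -> (forall s x t, coef P Nz s x t <> 0) ->
  ser_eq P (sscale (lead P Nz) (smul (monoS Nz (constF 1)) (sadd sone (lq P Nz)))).
Proof.
  intros HP Hn i s x t. rewrite coef_sscale, coef_smul_monoS_l, coef_sadd, coef_sone.
  rewrite coef_lq. unfold lead, constF.
  destruct (Z.eqb_spec (i - Nz) 0).
  - assert (i = Nz) by lia. subst. destruct (Z.leb_spec (Nz - Nz) (-1)); [lia|]. unfold zeroF. ring.
  - destruct (Z.leb_spec (i - Nz) (-1)).
    + replace (Nz + (i - Nz))%Z with i by lia. field. auto.
    + rewrite HP by lia. unfold zeroF. ring.
Qed.

Lemma regular_ser_lq P Nz : regular_ser P -> (forall s x t, coef P Nz s x t <> 0) -> regular_ser (lq P Nz).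
Proof.
  intros HP Hn i. unfold coef; simpl. destruct (i <=? -1)%Z; [|apply regular_zeroF].
  apply (regular_ext (fun s x t => coef P (Nz + i) s x t * / lead P Nz s x t)).
  - intros; reflexivity.
  - apply regular_mult; auto. apply regular_inv; auto.
Qed.

Lemma smul_log_dk P Nz : deg_le P Nz -> (forall s x t, coef P Nz s x t <> 0) ->
  ser_eq (smul P (log_dk P Nz)) (sdk P).
Proof.
  intros HP Hn.
  set (K := monoS Nz (constF 1)). set (q := lq P Nz). set (U := sadd sone q).
  assert (HF := lead_factorization P Nz HP Hn). fold K q U in HF.
  assert (Hq : deg_le q (-1)) by apply deg_le_sdeg.
  assert (HT := log1p_derivation sdk (fun _ => True) ser_derivation_sdk q (logtail P Nz) I Hq (logtail_agree_trunc P Nz)). fold U in HT.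
  rewrite (sdk_Proper P _ HF).
  transitivity (smul (sscale (lead P Nz) (smul K U)) (log_dk P Nz)). { apply smul_Proper; [exact HF|reflexivity]. }
  unfold log_dk. rewrite sdk_sscale, !sscale_monoS.
  unfold U at 2. rewrite sdk_mul, sdk_add, sdk_sone. unfold K at 2. rewrite sdk_monoS.
  transitivity (sadd (smul (monoS 0 (lead P Nz)) (smul (smul K (monoS (-1) (constF (IZR Nz)))) U))
                     (smul (monoS 0 (lead P Nz)) (smul K (smul U (sdk (logtail P Nz)))))).
  { unfold U; ring. }
  rewrite HT. unfold K. rewrite monoS_mul. replace (Nz + -1)%Z with (Nz - 1)%Z by lia.
  rewrite (monoS_ext (Nz - 1) _ (fun s x t => IZR Nz * constF 1 s x t)) by (intros; unfold constF; ring).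
  unfold U. ring.
Qed.

Lemma smul_log_dD Dr P Nz : derivation Dr -> regular_ser P -> deg_le P Nz -> (forall s x t, coef P Nz s x t <> 0) ->
  ser_eq (smul P (log_dD Dr P Nz)) (smap Dr P).
Proof.
  intros HD HrP HP Hn.
  set (K := monoS Nz (constF 1)). set (q := lq P Nz). set (U := sadd sone q).
  assert (HF := lead_factorization P Nz HP Hn). fold K q U in HF.
  assert (Hq : deg_le q (-1)) by apply deg_le_sdeg.
  assert (Hrq : regular_ser q) by (apply regular_ser_lq; auto).
  assert (HT := log1p_derivation (smap Dr) regular_ser (ser_derivation_smap Dr HD) q (logtail P Nz) Hrq Hq (logtail_agree_trunc P Nz)). fold U in HT.
  assert (HrK : regular_ser K) by (apply regular_ser_monoS, regular_constF).
  assert (HrU : regular_ser U) by (apply regular_ser_sadd; auto using regular_ser_sone).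
  assert (Hp0 : regular (lead P Nz)) by apply HrP.
  rewrite (smap_eq Dr _ _ (D_zeroF _ HD) HF).
  transitivity (smul (sscale (lead P Nz) (smul K U)) (log_dD Dr P Nz)). { apply smul_Proper; [exact HF|reflexivity]. }
  unfold log_dD.
  rewrite (smap_sscale Dr HD) by (auto; apply regular_ser_smul; auto).
  rewrite (smap_mul Dr HD) by auto.
  assert (Z1 : forall d, ser_eq (monoS d (Dr (constF 1))) szero).
  { intros d. rewrite <- (monoS_zero d). apply monoS_ext. intros. apply (D_const _ HD 1). }
  assert (A1 : ser_eq (smap Dr K) szero) by (unfold K; rewrite (smap_monoS Dr HD); apply Z1).
  assert (A2 : ser_eq (smap Dr U) (smap Dr q)).
  { unfold U. rewrite (smap_add Dr HD) by (auto using regular_ser_sone). unfold sone. rewrite (smap_monoS Dr HD), Z1. ring. }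
  rewrite A1, A2, !sscale_monoS.
  assert (E : ser_eq (smul (monoS 0 (lead P Nz)) (monoS 0 (Dr (logc P Nz)))) (monoS 0 (Dr (lead P Nz)))).
  { rewrite monoS_mul. apply monoS_ext. intros s x t. unfold logc.
    rewrite (D_ln _ HD (lead P Nz)) by auto. field. apply Hn. }
  transitivity (sadd (smul (smul (monoS 0 (lead P Nz)) (monoS 0 (Dr (logc P Nz)))) (smul K U))
                     (smul (monoS 0 (lead P Nz)) (smul K (smul U (smap Dr (logtail P Nz)))))).
  { unfold U; ring. }
  rewrite HT, E. unfold U. ring.
Qed.

#[global] Instance smap_dX_Proper : Proper (ser_eq ==> ser_eq) (smap dX).
Proof. intros f g E. apply smap_eq; auto. apply (D_zeroF _ derivation_dX). Qed.

#[global] Instance pb_Proper : Proper (ser_eq ==> ser_eq ==> ser_eq) pb.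
Proof. intros f f' Hf g g' Hg. unfold pb. rewrite Hf, Hg. reflexivity. Qed.

Lemma pbLog_Proper P Nz : Proper (ser_eq ==> ser_eq) (pbLog P Nz).
Proof. intros g g' Hg. unfold pbLog. rewrite Hg. reflexivity. Qed.

Lemma sdk_monoS0 c : ser_eq (sdk (monoS 0 c)) szero.
Proof.
  rewrite sdk_monoS. rewrite <- (monoS_zero (0 - 1)). apply monoS_ext. intros. unfold zeroF. simpl. ring.
Qed.

Lemma coef0_smul_neg f g d1 d2 s x t : deg_le f d1 -> deg_le g d2 -> (d1 + d2 < 0)%Z -> coef (smul f g) 0 s x t = 0.
Proof. intros H1 H2 H3. apply (deg_le_smul f g d1 d2); auto. Qed.

Lemma coef0_smul_top f g s x t : deg_le f 0 -> deg_le g 0 -> coef (smul f g) 0 s x t = coef f 0 s x t * coef g 0 s x t.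
Proof. intros H1 H2. apply (coef_smul_top f g 0 0); auto. Qed.

(** * Constant terms and the dmKP projection *)

Definition snonpos (X : ser) : ser := ssub X (spos X).

Lemma deg_le_snonpos X : deg_le (snonpos X) 0.
Proof. intros i Hi s x t. unfold snonpos. rewrite coef_ssub, coef_spos. destruct (Z.ltb_spec 0 i); [ring|lia]. Qed.

Lemma coef0_snonpos X s x t : coef (snonpos X) 0 s x t = coef X 0 s x t.
Proof. unfold snonpos. rewrite coef_ssub, coef_spos. simpl. ring. Qed.

Lemma coef0_snonpos_fn X : coef (snonpos X) 0 = coef X 0.
Proof. apply fn_ext. intros; apply coef0_snonpos. Qed.

Lemma spos_snonpos_split X : ser_eq X (sadd (spos X) (snonpos X)).
Proof. unfold snonpos. ring. Qed.

Lemma deg_le_sdk_snonpos X : deg_le (sdk (snonpos X)) (-2).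
Proof.
  intros i Hi s x t. rewrite coef_sdk. destruct (Z.eq_dec i (-1)).
  - subst. simpl. ring.
  - rewrite (deg_le_snonpos X) by lia. ring.
Qed.

Lemma coef0_spos X : coef (spos X) 0 = zeroF.
Proof. apply fn_ext. intros. rewrite coef_spos. reflexivity. Qed.

Lemma deg_le_logtail P Nz : deg_le (logtail P Nz) (-1).
Proof. apply deg_le_sdeg. Qed.

Lemma deg_le_log_dk P Nz : deg_le (log_dk P Nz) (-1).
Proof.
  unfold log_dk. apply deg_le_sadd; [apply deg_le_monoS|].
  apply (deg_le_mono _ (-1 - 1)); [apply deg_le_sdk, deg_le_logtail|lia].
Qed.

Lemma deg_le_log_dD Dr P Nz : derivation Dr -> deg_le (log_dD Dr P Nz) 0.
Proof.
  intros HD. unfold log_dD. apply deg_le_sadd; [apply deg_le_monoS|].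
  apply (deg_le_mono _ (-1)); [apply (deg_le_smap _ HD), deg_le_logtail|lia].
Qed.

Lemma coef0_log_dD Dr P Nz s x t : derivation Dr -> regular_ser P -> (forall s x t, coef P Nz s x t <> 0) ->
  coef (log_dD Dr P Nz) 0 s x t = Dr (coef P Nz) s x t / coef P Nz s x t.
Proof.
  intros HD HP Hn. unfold log_dD. rewrite coef_sadd, coef_monoS. simpl.
  rewrite coef_smap by apply (D_zeroF _ HD).
  rewrite (D_ext Dr (coef (logtail P Nz) 0) zeroF) by (intros; apply deg_le_logtail; lia).
  rewrite (D_zeroF _ HD). unfold zeroF, logc. rewrite (D_ln _ HD (lead P Nz)); auto. unfold lead. ring.
Qed.

Lemma coef_sshift_spos_neg X a i s x t : (i < 0)%Z -> coef (sshift (spos X) a) i s x t = 0.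
Proof.
  intros Hi. rewrite (coef_sshift_window (spos X) a (sdeg X) i i (Z.to_nat (sdeg X - i + 1))).
  - apply sumZ_zero. intros j Hj. rewrite coef_spos. destruct (Z.ltb_spec 0 j).
    + rewrite binomZ_van by lia. ring.
    + ring.
  - exact (deg_le_sdeg (spos X)).
  - lia.
  - lia.
Qed.

Lemma snneg_sshift X a : ser_eq (snneg (sshift X a)) (sadd (sshift (spos X) a) (monoS 0 (coef X 0))).
Proof.
  intros i s x t. rewrite coef_snneg, coef_sadd, coef_monoS.
  rewrite ((sshift_Proper _ _ (spos_snonpos_split X) a a eq_refl) i s x t).
  rewrite sshift_add, coef_sadd.
  destruct (Z.leb_spec 0 i).
  - destruct (Z.eqb_spec i 0).
    + subst. rewrite (coef_sshift_top (snonpos X) a 0 s x t (deg_le_snonpos X)), coef0_snonpos. reflexivity.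
    + rewrite (deg_le_sshift (snonpos X) a 0 (deg_le_snonpos X)) by lia. ring.
  - rewrite coef_sshift_spos_neg by lia. destruct (Z.eqb_spec i 0); [lia|ring].
Qed.

Lemma snneg_spow_sshift L a n : ser_eq (snneg (spow (sshift L a) n)) (sadd (sshift (spos (spow L n)) a) (monoS 0 (coef (spow L n) 0))).
Proof. rewrite <- sshift_spow. apply snneg_sshift. Qed.

Section ShiftedP.
Variables (P : ser) (Nz : Z) (a : Defs.Fn).
Hypothesis rP : regular_ser P.
Hypothesis dP : deg_le P Nz.
Hypothesis nP : forall s x t, coef P Nz s x t <> 0.
Hypothesis ra : regular a.

Definition pshift : ser := sscale (fun s x t => / coef P Nz s x t) (sshift P a).

Lemma regular_inv_lead : regular (fun s x t => / coef P Nz s x t).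
Proof. apply regular_inv; auto. Qed.

Lemma deg_le_pshift : deg_le pshift Nz.
Proof. apply deg_le_sscale, deg_le_sshift; auto. Qed.

Lemma coef_lead_pshift s x t : coef pshift Nz s x t = 1.
Proof. unfold pshift. rewrite coef_sscale, coef_sshift_top by auto. field. auto. Qed.

Lemma coef_lead_pshift_neq0 : forall s x t, coef pshift Nz s x t <> 0.
Proof. intros. rewrite coef_lead_pshift. lra. Qed.

Lemma regular_ser_pshift : regular_ser pshift.
Proof. apply regular_ser_sscale; [apply regular_inv_lead|apply regular_ser_sshift; auto]. Qed.

Lemma pshift_monoS : ser_eq pshift (smul (monoS 0 (fun s x t => / coef P Nz s x t)) (sshift P a)).
Proof. apply sscale_monoS. Qed.

(* Both sides are determined by their product with pshift, whose leading coefficient is 1. *)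
Lemma log_dk_pshift : ser_eq (log_dk pshift Nz) (sshift (log_dk P Nz) a).
Proof.
  apply (smul_cancel_l pshift Nz); [apply deg_le_pshift|apply coef_lead_pshift_neq0|].
  rewrite (smul_log_dk pshift Nz deg_le_pshift coef_lead_pshift_neq0). unfold pshift at 1. rewrite sdk_sscale, sdk_sshift.
  rewrite <- (sshift_Proper _ _ (smul_log_dk P Nz dP nP) a a eq_refl). rewrite sshift_mul.
  rewrite pshift_monoS, sscale_monoS. ring.
Qed.

Lemma log_dD_pshift Dr : derivation Dr ->
  ser_eq (log_dD Dr pshift Nz)
    (ssub (ssub (sshift (log_dD Dr P Nz) a) (smul (monoS 0 (Dr a)) (sshift (log_dk P Nz) a)))
          (monoS 0 (fun s x t => Dr (coef P Nz) s x t / coef P Nz s x t))).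
Proof.
  intros HD.
  apply (smul_cancel_l pshift Nz); [apply deg_le_pshift|apply coef_lead_pshift_neq0|].
  rewrite (smul_log_dD Dr pshift Nz HD regular_ser_pshift deg_le_pshift coef_lead_pshift_neq0). unfold pshift at 1.
  rewrite (smap_sscale Dr HD _ _ regular_inv_lead (regular_ser_sshift _ _ rP ra)).
  rewrite (smap_sshift Dr P a HD rP ra).
  rewrite <- (sshift_Proper _ _ (smul_log_dD Dr P Nz HD rP dP nP) a a eq_refl).
  rewrite <- (sshift_Proper _ _ (smul_log_dk P Nz dP nP) a a eq_refl).
  rewrite !sshift_mul. rewrite pshift_monoS, !sscale_monoS.
  assert (E : ser_eq (monoS 0 (Dr (fun s x t => / coef P Nz s x t)))
     (sopp (smul (monoS 0 (fun s x t => / coef P Nz s x t)) (monoS 0 (fun s x t => Dr (coef P Nz) s x t / coef P Nz s x t))))).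
  { rewrite monoS_mul, monoS_opp. apply monoS_ext. intros s x t.
    rewrite (D_inv _ HD (coef P Nz) (rP Nz) nP). field. auto. }
  rewrite E. ring.
Qed.

End ShiftedP.

Lemma monoS0_opp c c' : (forall s x t, c s x t = - c' s x t) -> ser_eq (monoS 0 c) (sopp (monoS 0 c')).
Proof. intros H. rewrite monoS_opp. apply monoS_ext. auto. Qed.

Lemma coef_pshift_neg P Nz a : (forall i, (i <= 0)%Z -> forall s x t, coef P i s x t = 0) ->
  forall i, (i < 0)%Z -> forall s x t, coef (pshift P Nz a) i s x t = 0.
Proof.
  intros HP i Hi s x t. unfold pshift. rewrite coef_sscale.
  assert (E : ser_eq P (spos P)).
  { intros j s' x' t'. rewrite coef_spos. destruct (Z.ltb_spec 0 j); [reflexivity|]. apply HP; lia. }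
  rewrite (sshift_Proper _ _ E a a eq_refl i s x t), coef_sshift_spos_neg by lia. ring.
Qed.

(** * From dcmKP to dmKP *)

Section Solution.
Variables (N : Z) (L P : ser).
Hypothesis L_coef1 : forall s x t, coef L 1 s x t = 1.
Hypothesis L_deg : forall i, (1 < i)%Z -> forall s x t, coef L i s x t = 0.
Hypothesis P_deg : deg_le P N.
Hypothesis P_lead_neq0 : forall s x t, coef P N s x t <> 0.
Hypothesis L_reg : regular_ser L.
Hypothesis P_reg : regular_ser P.
Hypothesis T_flow : forall n, ser_eq (smap (dT (S n)) L) (pb (spos (spow L (S n))) L).
Hypothesis S_flow : ser_eq (smap dS L) (pbLog P N L).
Hypothesis log_flow : forall n,
  ser_eq (log_dD (dT (S n)) P N) (ssub (smap dS (spos (spow L (S n)))) (pbLog P N (spos (spow L (S n))))).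

Local Notation a := (coef L 0).

Lemma deg_le_L : deg_le L 1.
Proof. intros i Hi; apply L_deg; auto. Qed.

Lemma regular_coef0_L : regular a.
Proof. apply L_reg. Qed.

Lemma deg_le_smap_L Dr : derivation Dr -> deg_le (smap Dr L) 0.
Proof.
  intros HD i Hi s x t. rewrite coef_smap by apply (D_zeroF _ HD).
  destruct (Z.eq_dec i 1).
  - subst. rewrite (D_ext Dr _ (constF 1)) by (intros; apply L_coef1). apply (D_const _ HD 1).
  - rewrite (D_ext Dr _ zeroF) by (intros; apply L_deg; lia). rewrite (D_zeroF _ HD). reflexivity.
Qed.

Lemma deg_le_sdk_L : deg_le (sdk L) 0.
Proof. intros i Hi s x t. rewrite coef_sdk, L_deg by lia. ring. Qed.

Lemma coef0_sdk_L s x t : coef (sdk L) 0 s x t = 1.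
Proof. rewrite coef_sdk. simpl. rewrite L_coef1. ring. Qed.

Lemma pb_spow_self n : ser_eq (pb (spow L (S n)) L) szero.
Proof.
  unfold pb. rewrite (sd_spow _ _ ser_derivation_sdk) by auto.
  rewrite (sd_spow _ _ (ser_derivation_smap dX derivation_dX)) by auto.
  rewrite <- (sopp_def (smul (smul (cst (INR (S n))) (smul (spow L n) (sdk L))) (smap dX L))). ring.
Qed.

(* Since {L^n, L} = 0, the bracket {(L^n)_{>0}, L} equals -{(L^n)_{<=0}, L}, whose constant
   term only involves the constant term of L^n. *)
Lemma dT_coef0_L n s x t : dT (S n) a s x t = dX (coef (spow L (S n)) 0) s x t.
Proof.
  set (X := spow L (S n)).
  assert (rX : regular_ser X) by (apply regular_ser_spow; auto).
  assert (rB : regular_ser (spos X)) by (apply regular_ser_spos; auto).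
  assert (rR : regular_ser (snonpos X)) by (apply regular_ser_ssub; auto).
  assert (E1 : ser_eq (pb (spos X) L) (sopp (pb (snonpos X) L))).
  { assert (E0 := pb_spow_self n). fold X in E0.
    rewrite (pb_Proper _ _ (spos_snonpos_split X) L L (reflexivity _)) in E0.
    unfold pb in *. rewrite sdk_add, (smap_add dX derivation_dX) in E0 by assumption.
    transitivity (sadd (sopp (ssub (smul (sdk (snonpos X)) (smap dX L)) (smul (smap dX (snonpos X)) (sdk L))))
       (ssub (smul (sadd (sdk (spos X)) (sdk (snonpos X))) (smap dX L)) (smul (sadd (smap dX (spos X)) (smap dX (snonpos X))) (sdk L)))).
    - ring.
    - rewrite E0. ring. }
  assert (H := T_flow n 0%Z s x t). rewrite coef_smap in H by apply (D_zeroF _ (derivation_dT _)).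
  fold X in H. rewrite H, E1, coef_sopp. unfold pb. rewrite coef_ssub.
  rewrite (coef0_smul_neg (sdk (snonpos X)) (smap dX L) (-2) 0 s x t (deg_le_sdk_snonpos X) (deg_le_smap_L dX derivation_dX)) by lia.
  rewrite (coef0_smul_top (smap dX (snonpos X)) (sdk L) s x t (deg_le_smap dX derivation_dX _ _ (deg_le_snonpos X)) deg_le_sdk_L).
  rewrite coef0_sdk_L, coef_smap by apply (D_zeroF _ derivation_dX). rewrite coef0_snonpos_fn. ring.
Qed.

Lemma dS_coef0_L s x t : dS a s x t = - dX (coef P N) s x t / coef P N s x t.
Proof.
  assert (H := S_flow 0%Z s x t). rewrite coef_smap in H by apply (D_zeroF _ derivation_dS). rewrite H.
  unfold pbLog. rewrite coef_ssub.
  rewrite (coef0_smul_neg (log_dk P N) (smap dX L) (-1) 0 s x t (deg_le_log_dk P N) (deg_le_smap_L dX derivation_dX)) by lia.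
  rewrite (coef0_smul_top (log_dD dX P N) (sdk L) s x t (deg_le_log_dD dX P N derivation_dX) deg_le_sdk_L).
  rewrite coef0_sdk_L, (coef0_log_dD dX P N s x t derivation_dX P_reg P_lead_neq0). field. auto.
Qed.

Lemma dS_coef0_spow n s x t :
  dS (coef (spow L (S n)) 0) s x t = - dT (S n) (coef P N) s x t / coef P N s x t.
Proof.
  set (X := spow L (S n)).
  assert (rX : regular_ser X) by (apply regular_ser_spow; auto).
  assert (rB : regular_ser (spos X)) by (apply regular_ser_spos; auto).
  assert (rR : regular_ser (snonpos X)) by (apply regular_ser_ssub; auto).
  assert (H := log_flow n 0%Z s x t).
  rewrite (coef0_log_dD (dT (S n)) P N s x t (derivation_dT _) P_reg P_lead_neq0) in H.
  rewrite coef_ssub, coef_smap in H by apply (D_zeroF _ derivation_dS).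
  fold X in H. rewrite coef0_spos, (D_zeroF _ derivation_dS) in H. unfold zeroF in H.
  assert (E1 : ser_eq (smap dS X) (pbLog P N X)).
  { unfold X. rewrite (sd_spow _ _ (ser_derivation_smap dS derivation_dS)) by auto. rewrite S_flow. unfold pbLog.
    rewrite (sd_spow _ _ ser_derivation_sdk) by auto.
    rewrite (sd_spow _ _ (ser_derivation_smap dX derivation_dX)) by auto. ring. }
  assert (E2 : ser_eq (pbLog P N X) (sadd (pbLog P N (spos X)) (pbLog P N (snonpos X)))).
  { rewrite (pbLog_Proper P N _ _ (spos_snonpos_split X)). unfold pbLog.
    rewrite sdk_add, (smap_add dX derivation_dX) by assumption. ring. }
  rewrite <- (coef_smap dS X 0 s x t) by apply (D_zeroF _ derivation_dS).
  rewrite E1, E2, coef_sadd. unfold pbLog at 2. rewrite coef_ssub.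
  rewrite (coef0_smul_neg (log_dk P N) (smap dX (snonpos X)) (-1) 0 s x t (deg_le_log_dk P N) (deg_le_smap dX derivation_dX _ _ (deg_le_snonpos X))) by lia.
  rewrite (coef0_smul_neg (log_dD dX P N) (sdk (snonpos X)) 0 (-2) s x t (deg_le_log_dD dX P N derivation_dX) (deg_le_sdk_snonpos X)) by lia.
  lra.
Qed.

Lemma coef0_sshift_L s x t : coef (sshift L a) 0 s x t = 0.
Proof.
  rewrite (coef_sshift_window L a 1 0 0 2 s x t deg_le_L) by lia.
  rewrite !sumZ_S, sumZ_0. simpl. rewrite L_coef1. unfold binomZ. simpl. unfold gbinom. simpl. field.
Qed.

Lemma T_flow_sshift n :
  ser_eq (smap (dT (S n)) (sshift L a)) (pb (snneg (spow (sshift L a) (S n))) (sshift L a)).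
Proof.
  assert (ra := regular_coef0_L).
  assert (rX : regular_ser (spow L (S n))) by (apply regular_ser_spow; auto).
  assert (rB : regular_ser (spos (spow L (S n)))) by (apply regular_ser_spos; auto).
  assert (rBs : regular_ser (sshift (spos (spow L (S n))) a)) by (apply regular_ser_sshift; auto).
  assert (rc : regular_ser (monoS 0 (coef (spow L (S n)) 0))) by (apply regular_ser_monoS; apply rX).
  rewrite (pb_Proper _ _ (snneg_spow_sshift L a (S n)) _ _ (reflexivity _)).
  rewrite (smap_sshift (dT (S n)) L a (derivation_dT _) L_reg ra).
  rewrite (sshift_Proper _ _ (T_flow n) _ _ eq_refl).
  unfold pb. rewrite sdk_add, sdk_monoS0, (smap_add dX derivation_dX _ _ rBs rc), (smap_monoS dX derivation_dX).
  rewrite !sdk_sshift, (smap_sshift dX _ _ derivation_dX rB ra), (smap_sshift dX L _ derivation_dX L_reg ra).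
  rewrite sshift_sub, !sshift_mul.
  rewrite (monoS_ext 0 (dT (S n) a) (dX (coef (spow L (S n)) 0))) by apply dT_coef0_L.
  ring.
Qed.

Lemma S_flow_sshift : ser_eq (smap dS (sshift L a)) (pbLog (pshift P N a) N (sshift L a)).
Proof.
  assert (ra := regular_coef0_L).
  rewrite (smap_sshift dS L _ derivation_dS L_reg ra), (sshift_Proper _ _ S_flow _ _ eq_refl).
  unfold pbLog.
  rewrite (log_dk_pshift P _ a P_deg P_lead_neq0), (log_dD_pshift P _ a P_reg P_deg P_lead_neq0 ra dX derivation_dX).
  rewrite sdk_sshift, (smap_sshift dX L _ derivation_dX L_reg ra), !sshift_sub, !sshift_mul.
  rewrite (monoS0_opp (dS a) (fun s x t => dX (coef P N) s x t / coef P N s x t))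
    by (intros; rewrite dS_coef0_L; field; auto).
  ring.
Qed.

Lemma log_flow_sshift n :
  ser_eq (log_dD (dT (S n)) (pshift P N a) N)
    (ssub (smap dS (snneg (spow (sshift L a) (S n))))
          (pbLog (pshift P N a) N (snneg (spow (sshift L a) (S n))))).
Proof.
  assert (ra := regular_coef0_L).
  assert (rX : regular_ser (spow L (S n))) by (apply regular_ser_spow; auto).
  assert (rB : regular_ser (spos (spow L (S n)))) by (apply regular_ser_spos; auto).
  assert (rBs : regular_ser (sshift (spos (spow L (S n))) a)) by (apply regular_ser_sshift; auto).
  assert (rc : regular_ser (monoS 0 (coef (spow L (S n)) 0))) by (apply regular_ser_monoS; apply rX).
  rewrite (log_dD_pshift P _ a P_reg P_deg P_lead_neq0 ra (dT (S n)) (derivation_dT _)).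
  rewrite (sshift_Proper _ _ (log_flow n) _ _ eq_refl).
  rewrite (smap_eq dS _ _ (D_zeroF _ derivation_dS) (snneg_spow_sshift L a (S n))).
  rewrite (pbLog_Proper (pshift P N a) N _ _ (snneg_spow_sshift L a (S n))).
  unfold pbLog.
  rewrite (log_dk_pshift P _ a P_deg P_lead_neq0), (log_dD_pshift P _ a P_reg P_deg P_lead_neq0 ra dX derivation_dX).
  rewrite (smap_add dS derivation_dS _ _ rBs rc), (smap_sshift dS _ _ derivation_dS rB ra), (smap_monoS dS derivation_dS).
  rewrite sdk_add, sdk_monoS0, (smap_add dX derivation_dX _ _ rBs rc), (smap_sshift dX _ _ derivation_dX rB ra).
  rewrite (smap_monoS dX derivation_dX), !sdk_sshift, !sshift_sub, !sshift_mul.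
  rewrite (monoS_ext 0 (dT (S n) a) (dX (coef (spow L (S n)) 0))) by apply dT_coef0_L.
  rewrite (monoS0_opp (dS a) (fun s x t => dX (coef P N) s x t / coef P N s x t))
    by (intros; rewrite dS_coef0_L; field; auto).
  rewrite (monoS0_opp (dS (coef (spow L (S n)) 0)) (fun s x t => dT (S n) (coef P N) s x t / coef P N s x t))
    by (intros; rewrite dS_coef0_spow; field; auto).
  ring.
Qed.

End Solution.

Theorem mainTheorem12 (N : nat) (L P : ser) :
  (0 < N)%nat ->
  is_dcmKP N L P ->
  is_dmKP N (sshift L (coef L 0))
            (sscale (fun s x t => / coef P (Z.of_nat N) s x t) (sshift P (coef L 0))).
Proof.
  intros _ (L1 & Lhi & Phi & Plo & Plead & rL & rP & HT & HS & HLog).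
  assert (dP : deg_le P (Z.of_nat N)) by (intros i Hi; apply Phi; auto).
  assert (HT' : forall n, ser_eq (smap (dT (S n)) L) (pb (spos (spow L (S n))) L))
    by (intros; apply HT; lia).
  assert (HLog' : forall n, ser_eq (log_dD (dT (S n)) P (Z.of_nat N))
    (ssub (smap dS (spos (spow L (S n)))) (pbLog P (Z.of_nat N) (spos (spow L (S n))))))
    by (intros; apply HLog; lia).
  change (sscale _ (sshift P (coef L 0))) with (pshift P (Z.of_nat N) (coef L 0)).
  split; [|split; [|split; [|split; [|split; [|split; [|split; [|split; [|split; [|split]]]]]]]]].
  - intros s x t. rewrite (coef_sshift_top L _ 1 s x t (deg_le_L L Lhi)). auto.
  - intros i Hi s x t. apply (deg_le_sshift L _ 1 (deg_le_L L Lhi)); auto.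
  - apply coef0_sshift_L; auto.
  - apply coef_lead_pshift; auto.
  - intros i Hi s x t. apply (deg_le_pshift P _ _ dP i Hi).
  - apply coef_pshift_neg; auto.
  - apply regular_ser_sshift; auto.
  - apply regular_ser_pshift; auto.
  - intros [|n] Hn; [lia|]. apply T_flow_sshift; auto.
  - apply S_flow_sshift; auto.
  - intros [|n] Hn; [lia|]. apply log_flow_sshift; auto.
Qed.
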